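(* Let $\mathbf G$ and $\mathbf H$ be power-associative loops. The following are equivalent: (1) $\mathcal G(\mathbf G)\cong\mathcal G(\mathbf H)$; (2) $\mathcal G^\pm(\mathbf G)\cong\mathcal G^\pm(\mathbf H)$; (3) $\mathcal G^+(\mathbf G)\cong\mathcal G^+(\mathbf H)$.
   Context: A loop is power-associative if every subloop generated by one element is a group; powers are computed in $\langle x\rangle$. For a power-associative loop $\mathbf G$, each of the three graphs has vertex set $G$ and distinct $x,y$ are adjacent iff $y=x^n$ or $x=y^n$ for some $n$, where $n$ ranges over $\mathbb Z$ for the power graph $\mathcal G(\mathbf G)$, over $\mathbb Z\setminus\{0\}$ for the $Z^\pm$-power graph $\mathcal G^\pm(\mathbf G)$, and over the positive integers for the $N$-power graph $\mathcal G^+(\mathbf G)$. *)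

(* loops may be infinite, so we use plain types, not finTypes. *)
From Stdlib Require Import ZArith.

(* A loop, in the standard equational (quasigroup with identity) form:
   left division a \ b and right division b / a are the unique solutions of
   a * x = b and y * a = b. *)
Record Loop := {
  car :> Type;
  lmul : car -> car -> car;
  ldiv : car -> car -> car;
  rdiv : car -> car -> car;   (* rdiv b a = b / a *)
  lone : car;
  mul_ldiv : forall a b, lmul a (ldiv a b) = b;
  ldiv_mul : forall a b, ldiv a (lmul a b) = b;
  rdiv_mul : forall a b, lmul (rdiv b a) a = b;
  mul_rdiv : forall a b, rdiv (lmul b a) a = b;
  one_mul : forall a, lmul lone a = a;
  mul_one : forall a, lmul a lone = a
}.

Arguments lmul {l}. Arguments ldiv {l}. Arguments rdiv {l}. Arguments lone {l}.

Inductive gen (L : Loop) (x : L) : L -> Prop :=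
| gen_x : gen L x x
| gen_one : gen L x lone
| gen_mul : forall a b, gen L x a -> gen L x b -> gen L x (lmul a b)
| gen_ldiv : forall a b, gen L x a -> gen L x b -> gen L x (ldiv a b)
| gen_rdiv : forall a b, gen L x a -> gen L x b -> gen L x (rdiv a b).

(* Power-associative: every one-generated subloop is a group, i.e. the
   multiplication is associative on <x> (identity and inverses come from
   the loop structure, since <x> is a subloop). *)
Definition power_assoc (L : Loop) : Prop :=
  forall x a b c : L, gen L x a -> gen L x b -> gen L x c ->
    lmul (lmul a b) c = lmul a (lmul b c).

(* Nonnegative powers x^k (all bracketings agree inside the group <x>). *)
Definition powN (L : Loop) (x : L) (k : nat) : L :=
  Nat.iter k (fun z => lmul x z) lone.

(* is_pow L x n y  <->  y = x^n, powers computed in the group <x>: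
   x^(-k) is the inverse of x^k in <x>, which (loop inverses being unique)
   is the unique y with x^k * y = 1. *)
Definition is_pow (L : Loop) (x : L) (n : Z) (y : L) : Prop :=
  match n with
  | Z0 => y = lone
  | Zpos p => y = powN L x (Pos.to_nat p)
  | Zneg p => lmul (powN L x (Pos.to_nat p)) y = lone
  end.

Definition pgraph_adj (S : Z -> Prop) (L : Loop) (x y : L) : Prop :=
  x <> y /\ exists n : Z, S n /\ (is_pow L x n y \/ is_pow L y n x).

Definition power_adj (L : Loop) := pgraph_adj (fun _ => True) L.
Definition powerZpm_adj (L : Loop) := pgraph_adj (fun n => n <> 0%Z) L.
Definition powerN_adj (L : Loop) := pgraph_adj (fun n => (0 < n)%Z) L.

Definition graph_iso {A B : Type} (adjA : A -> A -> Prop) (adjB : B -> B -> Prop)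
  : Prop :=
  exists (f : A -> B) (g : B -> A),
    (forall a, g (f a) = a) /\ (forall b, f (g b) = b) /\
    (forall a1 a2, adjA a1 a2 <-> adjB (f a1) (f a2)).

(* Each of the three graphs determines which vertices are torsion elements. A non-torsion
   element x has exactly the closed twins x and x^-1 in the Z^{+-}-power graph and in the power
   graph with the identity removed, only itself in the N-power graph, and two non-adjacent
   neighbours x^2 and x^3; these properties hold on its whole component, while the component of a
   torsion element always contains a vertex where they fail. Hence isomorphisms preserve torsion.
   After a twin swap sending the identity to the identity, the power graph and the
   Z^{+-}-power graph differ exactly by the edges joining the identity to non-torsion elements.
   Between non-torsion elements, the N-power graph keeps those edges of the Z^{+-}-power graph that
   stay inside a class of positive commensurability (x^a = y^b with a, b > 0), and x and x^-1 are
   never in the same class. A Z^{+-}-isomorphism f becomes an N-isomorphism after replacing f x by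
   (f x)^-1 wherever it reverses a chosen orientation of the classes. Conversely, an N-isomorphism
   f becomes a Z^{+-}-isomorphism once it commutes with inversion; this is achieved by twisting it
   along the orbits of the rotation x |-> g ((f (x^-1))^-1) on positive-commensurability classes,
   as no orbit contains the classes of both x and x^-1. *)

From Stdlib Require Import ZArith Lia Relations Wf_nat.
From Stdlib Require Import Classical ClassicalEpsilon FunctionalExtensionality PropExtensionality.
Open Scope Z_scope.

Existing Class power_assoc.
#[local] Hint Constructors gen : core.

(** * Twins, components and isomorphisms of graphs *)

Section Graphs.
Context {V : Type} (R : V -> V -> Prop).

Definition closed_twins (x y : V) : Prop :=
  forall z, (z = x \/ R x z) <-> (z = y \/ R y z).

Definition has_unique_twin (x : V) : Prop :=
  exists t, t <> x /\ closed_twins x t /\ forall t', closed_twins x t' -> t' = x \/ t' = t.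

Definition twin_free (x : V) : Prop := forall t, closed_twins x t -> t = x.

Definition has_nonadjacent_nbrs (x : V) : Prop :=
  exists s t, R x s /\ R x t /\ s <> t /\ ~ R s t.

Definition on_component (P : V -> Prop) (x : V) : Prop :=
  forall w, clos_refl_trans V R x w -> P w.

Definition unique_twin_nonclique (x : V) : Prop := has_unique_twin x /\ has_nonadjacent_nbrs x.

Definition twin_free_nonclique (x : V) : Prop := twin_free x /\ has_nonadjacent_nbrs x.

Lemma on_component_of_invariant (Q P : V -> Prop) x :
  (forall a b, Q a -> R a b -> Q b) -> (forall a, Q a -> P a) -> Q x -> on_component P x.
Proof.
  intros HQ HP Hx w Hw. apply HP.
  induction Hw as [a b|a|a b c _ IH1 _ IH2]; eauto.
Qed.

Lemma on_component_step (P : V -> Prop) x y : on_component P x -> R x y -> on_component P y.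
Proof. intros Hx Hy w Hw. apply Hx. eapply rt_trans; [apply rt_step|]; eauto. Qed.

Lemma reach_sym x y : (forall a b, R a b -> R b a) ->
  clos_refl_trans V R x y -> clos_refl_trans V R y x.
Proof. intros Hsym Hxy. induction Hxy; eauto using rt_step, rt_refl, rt_trans. Qed.

Lemma closed_twins_refl x : closed_twins x x.
Proof. intros z; tauto. Qed.

Lemma closed_twins_sym x y : closed_twins x y -> closed_twins y x.
Proof. intros T z. specialize (T z). tauto. Qed.

Lemma closed_twins_trans x y w : closed_twins x y -> closed_twins y w -> closed_twins x w.
Proof. intros T1 T2 z. specialize (T1 z). specialize (T2 z). tauto. Qed.

Lemma closed_twins_nbr u v w : closed_twins u v -> w <> u -> w <> v -> (R u w <-> R v w).
Proof. intros T Hu Hv. specialize (T w). intuition congruence. Qed.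

Lemma not_unique_twin_of_two_twins v a b : a <> v -> b <> v -> a <> b ->
  closed_twins v a -> closed_twins v b -> ~ has_unique_twin v.
Proof. intros ? ? ? Ta Tb [t [_ [_ U]]]. destruct (U a Ta), (U b Tb); congruence. Qed.

End Graphs.

Definition graph_iso_by {A B : Type} (RA : A -> A -> Prop) (RB : B -> B -> Prop)
  (f : A -> B) (g : B -> A) : Prop :=
  (forall a, g (f a) = a) /\ (forall b, f (g b) = b) /\
  (forall a1 a2, RA a1 a2 <-> RB (f a1) (f a2)).

Section Isomorphisms.
Context {A B : Type} {RA : A -> A -> Prop} {RB : B -> B -> Prop} {f : A -> B} {g : B -> A}.
Hypothesis I : graph_iso_by RA RB f g.

Lemma graph_iso_by_sym : graph_iso_by RB RA g f.
Proof.
  destruct I as [K1 [K2 K3]]. repeat split; auto; intros.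
  - now rewrite K3, !K2.
  - rewrite K3, !K2 in *. auto.
Qed.

Lemma iso_inj a1 a2 : f a1 = f a2 -> a1 = a2.
Proof. destruct I as [K1 _]. intros E. now rewrite <- (K1 a1), <- (K1 a2), E. Qed.

Lemma iso_surj b : exists a, b = f a.
Proof. destruct I as [_ [K2 _]]. now exists (g b). Qed.

Lemma iso_closed_nbr a x : (f a = f x \/ RB (f x) (f a)) <-> (a = x \/ RA x a).
Proof.
  destruct I as [_ [_ K3]]. rewrite <- K3.
  split; intros [E|E]; auto; left; [now apply iso_inj | now subst].
Qed.

Lemma iso_closed_twins x y : closed_twins RA x y <-> closed_twins RB (f x) (f y).
Proof.
  split; intros T z.
  - destruct (iso_surj z) as [a ->]. rewrite !iso_closed_nbr. apply T.
  - specialize (T (f z)). now rewrite !iso_closed_nbr in T.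
Qed.

Lemma iso_reach x y : clos_refl_trans A RA x y -> clos_refl_trans B RB (f x) (f y).
Proof.
  destruct I as [_ [_ K3]]. induction 1.
  - apply rt_step, K3; auto.
  - apply rt_refl.
  - eapply rt_trans; eauto.
Qed.

Lemma iso_has_unique_twin x : has_unique_twin RA x -> has_unique_twin RB (f x).
Proof.
  intros [t [Ht [T U]]]. exists (f t). split; [|split].
  - intros E. now apply Ht, iso_inj.
  - now apply iso_closed_twins.
  - intros t' T'. destruct (iso_surj t') as [a ->].
    apply iso_closed_twins in T'. destruct (U a T') as [->| ->]; auto.
Qed.

Lemma iso_twin_free x : twin_free RA x -> twin_free RB (f x).
Proof.
  intros N t T. destruct (iso_surj t) as [a ->].
  apply iso_closed_twins in T. now rewrite (N a T).
Qed.

Lemma iso_has_nonadjacent_nbrs x : has_nonadjacent_nbrs RA x -> has_nonadjacent_nbrs RB (f x).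
Proof.
  destruct I as [_ [_ K3]]. intros [s [t [Hs [Ht [Hst N]]]]].
  exists (f s), (f t). rewrite <- !K3. do 3 (split; auto).
  intros E. now apply Hst, iso_inj.
Qed.

Lemma iso_eq_image a0 a : f a = f a0 <-> a = a0.
Proof. split; [apply iso_inj | now intros ->]. Qed.

End Isomorphisms.

Lemma graph_iso_by_comp {A B C : Type} {RA : A -> A -> Prop} {RB : B -> B -> Prop}
  {RC : C -> C -> Prop} {f : A -> B} {g : B -> A} {f' : B -> C} {g' : C -> B} :
  graph_iso_by RA RB f g -> graph_iso_by RB RC f' g' ->
  graph_iso_by RA RC (fun a => f' (f a)) (fun c => g (g' c)).
Proof.
  intros [H1 [H2 H3]] [K1 [K2 K3]]. repeat split; intros.
  - now rewrite K1, H1.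
  - now rewrite H2, K2.
  - now apply K3, H3.
  - now apply H3, K3.
Qed.

Section IsomorphismInvariants.
Context {A B : Type} {RA : A -> A -> Prop} {RB : B -> B -> Prop} {f : A -> B} {g : B -> A}.
Hypothesis I : graph_iso_by RA RB f g.

Lemma iso_on_component (PA : A -> Prop) (PB : B -> Prop) :
  (forall a, PA a -> PB (f a)) -> forall x, on_component RA PA x -> on_component RB PB (f x).
Proof.
  intros HP x Hx w Hw. destruct (iso_surj I w) as [a ->]. apply HP, Hx.
  rewrite <- (proj1 I x), <- (proj1 I a).
  now apply (iso_reach (graph_iso_by_sym I)).
Qed.

Lemma iso_unique_twin_nonclique x :
  unique_twin_nonclique RA x -> unique_twin_nonclique RB (f x).
Proof.
  intros [? ?]. split; [apply (iso_has_unique_twin I) | apply (iso_has_nonadjacent_nbrs I)]; auto.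
Qed.

Lemma iso_twin_free_nonclique x : twin_free_nonclique RA x -> twin_free_nonclique RB (f x).
Proof.
  intros [? ?]. split; [apply (iso_twin_free I) | apply (iso_has_nonadjacent_nbrs I)]; auto.
Qed.

End IsomorphismInvariants.

Lemma iso_preserves_component_characterized {A B : Type} {RA : A -> A -> Prop}
  {RB : B -> B -> Prop} {f : A -> B} {g : B -> A} (I : graph_iso_by RA RB f g)
  (PA QA : A -> Prop) (PB QB : B -> Prop) :
  (forall a, QA a <-> on_component RA PA a) -> (forall b, QB b <-> on_component RB PB b) ->
  (forall a, PA a -> PB (f a)) -> (forall b, PB b -> PA (g b)) ->
  forall a, QA a <-> QB (f a).
Proof.
  intros HA HB Hf Hg a. rewrite HA, HB. split; [now apply (iso_on_component I PA PB Hf)|].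
  intros Ha. rewrite <- (proj1 I a). now apply (iso_on_component (graph_iso_by_sym I) PB PA Hg).
Qed.

Section Swap.
Context {V : Type} (R : V -> V -> Prop).
Hypothesis R_sym : forall a b, R a b -> R b a.
Hypothesis R_irrefl : forall a, ~ R a a.

Definition swap (u v w : V) : V :=
  if excluded_middle_informative (w = u) then v
  else if excluded_middle_informative (w = v) then u else w.

Lemma swap_l u v : swap u v u = v.
Proof. unfold swap. destruct excluded_middle_informative; congruence. Qed.

Lemma swap_r u v : swap u v v = u.
Proof. unfold swap. repeat destruct excluded_middle_informative; congruence. Qed.

Lemma swap_other u v w : w <> u -> w <> v -> swap u v w = w.
Proof. unfold swap. repeat destruct excluded_middle_informative; congruence. Qed.

Lemma swap_involutive u v w : swap u v (swap u v w) = w.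
Proof. unfold swap. repeat (destruct excluded_middle_informative; subst; try congruence). Qed.

Lemma swap_cases u v w :
  (w = u /\ swap u v w = v) \/ (w = v /\ swap u v w = u) \/
  (w <> u /\ w <> v /\ swap u v w = w).
Proof.
  destruct (classic (w = u)) as [->|]; [left; split; auto using swap_l|].
  destruct (classic (w = v)) as [->|]; [right; left; split; auto using swap_r|].
  right; right. auto using swap_other.
Qed.

Lemma swap_adj u v a b : closed_twins R u v -> R a b -> R (swap u v a) (swap u v b).
Proof.
  intros T Hab.
  assert (Nu : forall w, w <> u -> w <> v -> R u w <-> R v w) by
    (intros; now apply closed_twins_nbr).
  destruct (swap_cases u v a) as [[-> ->]|[[-> ->]|[Au [Av ->]]]];
  destruct (swap_cases u v b) as [[-> ->]|[[-> ->]|[Bu [Bv ->]]]];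
  try (now apply R_irrefl in Hab); auto.
  - now apply Nu.
  - now apply Nu.
  - now apply R_sym, Nu, R_sym.
  - now apply R_sym, Nu, R_sym.
Qed.

Lemma swap_twins_iso u v : closed_twins R u v -> graph_iso_by R R (swap u v) (swap u v).
Proof.
  intros T. split; [|split]; [apply swap_involutive .. |]. intros a b. split.
  - now apply swap_adj.
  - intros Hab. rewrite <- (swap_involutive u v a), <- (swap_involutive u v b).
    now apply swap_adj.
Qed.

End Swap.

Lemma iso_fixing_point {A B : Type} {RA : A -> A -> Prop} {RB : B -> B -> Prop}
  {f : A -> B} {g : B -> A} (I : graph_iso_by RA RB f g) a0 b0 :
  (forall a b, RB a b -> RB b a) -> (forall b, ~ RB b b) -> closed_twins RB (f a0) b0 ->
  exists f' g', graph_iso_by RA RB f' g' /\ f' a0 = b0.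
Proof.
  intros Hsym Hirr T. exists (fun a => swap (f a0) b0 (f a)), (fun b => g (swap (f a0) b0 b)).
  split; [|apply swap_l]. apply (graph_iso_by_comp I). now apply swap_twins_iso.
Qed.

(** * Powers in a power-associative loop *)

Section Powers.
Context {L : Loop}.

Definition inv (x : L) : L := ldiv x lone.

Definition zpow (x : L) (n : Z) : L :=
  match n with
  | Z0 => lone
  | Zpos p => powN L x (Pos.to_nat p)
  | Zneg p => inv (powN L x (Pos.to_nat p))
  end.

Lemma mul_inv_r (a : L) : lmul a (inv a) = lone.
Proof. apply mul_ldiv. Qed.

Lemma inv_unique (a b : L) : lmul a b = lone -> b = inv a.
Proof. unfold inv. intros <-. now rewrite ldiv_mul. Qed.

Lemma mul_cancel_r (a b c : L) : lmul a c = lmul b c -> a = b.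
Proof. intros E. now rewrite <- (mul_rdiv _ c a), <- (mul_rdiv _ c b), E. Qed.

Lemma mul_cancel_l (a b c : L) : lmul c a = lmul c b -> a = b.
Proof. intros E. now rewrite <- (ldiv_mul _ c a), <- (ldiv_mul _ c b), E. Qed.

Lemma inv_one : inv (@lone L) = lone.
Proof. symmetry. apply inv_unique, mul_one. Qed.

Lemma gen_powN (x : L) k : gen L x (powN L x k).
Proof. induction k; simpl; auto. Qed.

Lemma gen_inv (x a : L) : gen L x a -> gen L x (inv a).
Proof. unfold inv; auto. Qed.

Lemma gen_zpow (x : L) n : gen L x (zpow x n).
Proof. destruct n; simpl; auto using gen_inv, gen_powN. Qed.

#[local] Hint Resolve gen_powN gen_inv gen_zpow : core.

Lemma zpow_of_nat (x : L) k : zpow x (Z.of_nat k) = powN L x k.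
Proof. destruct k; [reflexivity|]. simpl. now rewrite SuccNat2Pos.id_succ. Qed.

Lemma zpow_opp_of_nat (x : L) k : zpow x (- Z.of_nat k) = inv (powN L x k).
Proof. destruct k; simpl; [symmetry; apply inv_one|]. now rewrite SuccNat2Pos.id_succ. Qed.

Lemma zpow_1 (x : L) : zpow x 1 = x.
Proof. apply mul_one. Qed.

Lemma is_pow_iff (x : L) n y : is_pow L x n y <-> y = zpow x n.
Proof.
  destruct n; simpl; try tauto. unfold inv. split.
  - intros <-. now rewrite ldiv_mul.
  - intros ->. apply mul_ldiv.
Qed.

Context `{hL : power_assoc L}.

Lemma mul_assoc_gen (x a b c : L) : gen L x a -> gen L x b -> gen L x c ->
  lmul (lmul a b) c = lmul a (lmul b c).
Proof. apply hL. Qed.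

Lemma mul_inv_l (x a : L) : gen L x a -> lmul (inv a) a = lone.
Proof.
  intros Ha. apply (mul_cancel_r _ _ (inv a)).
  rewrite (mul_assoc_gen x) by auto.
  now rewrite mul_inv_r, mul_one, one_mul.
Qed.

Lemma powN_add (x : L) m n : lmul (powN L x m) (powN L x n) = powN L x (m + n).
Proof.
  induction m; simpl; [apply one_mul|].
  rewrite (mul_assoc_gen x) by auto. now rewrite IHm.
Qed.

Lemma zpow_succ (x : L) n : zpow x (Z.succ n) = lmul x (zpow x n).
Proof.
  destruct (Z_lt_le_dec n 0) as [Hn|Hn].
  - destruct (Z_of_nat_complete_inf (- n - 1)) as [k Hk]; [lia|].
    replace n with (- Z.of_nat (S k)) by lia.
    replace (Z.succ (- Z.of_nat (S k))) with (- Z.of_nat k) by lia.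
    rewrite !zpow_opp_of_nat. symmetry. apply inv_unique.
    (* x^(k+1) = x^k * x, so x * inv (x^(k+1)) inverts x^k *)
    assert (Hcomm : powN L x (S k) = lmul (powN L x k) x).
    { rewrite <- (mul_one _ x) at 3. change (lmul x lone) with (powN L x 1).
      rewrite powN_add. f_equal. lia. }
    rewrite <- (mul_assoc_gen x) by auto.
    rewrite <- Hcomm. apply mul_inv_r.
  - destruct (Z_of_nat_complete_inf n Hn) as [k ->].
    now rewrite <- Nat2Z.inj_succ, !zpow_of_nat.
Qed.

Lemma zpow_pred (x : L) n : zpow x (Z.pred n) = lmul (inv x) (zpow x n).
Proof.
  rewrite <- (Z.succ_pred n) at 2. rewrite zpow_succ.
  rewrite <- (mul_assoc_gen x) by auto.
  now rewrite (mul_inv_l x), one_mul by auto.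
Qed.

Lemma zpow_add (x : L) m n : zpow x (m + n) = lmul (zpow x m) (zpow x n).
Proof.
  induction m using Z.peano_ind.
  - symmetry. apply one_mul.
  - rewrite Z.add_succ_l, !zpow_succ, IHm.
    symmetry. apply (mul_assoc_gen x); auto.
  - rewrite Z.add_pred_l, !zpow_pred, IHm.
    symmetry. apply (mul_assoc_gen x); auto.
Qed.

Lemma zpow_opp (x : L) n : zpow x (- n) = inv (zpow x n).
Proof. apply inv_unique. rewrite <- zpow_add. now rewrite Z.add_opp_diag_r. Qed.

Lemma zpow_m1 (x : L) : zpow x (-1) = inv x.
Proof. change (-1) with (- (1)). now rewrite zpow_opp, zpow_1. Qed.

Lemma zpow_one n : zpow (@lone L) n = lone.
Proof.
  induction n using Z.peano_ind; [reflexivity| |].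
  - now rewrite zpow_succ, IHn, mul_one.
  - now rewrite zpow_pred, IHn, mul_one, inv_one.
Qed.

Lemma zpow_mul (x : L) m n : zpow (zpow x m) n = zpow x (m * n).
Proof.
  induction n using Z.peano_ind.
  - now rewrite Z.mul_0_r.
  - rewrite zpow_succ, IHn, <- zpow_add. f_equal. lia.
  - rewrite zpow_pred, IHn, <- zpow_opp, <- zpow_add. f_equal. lia.
Qed.

Lemma inv_inv (x : L) : inv (inv x) = x.
Proof. now rewrite <- !zpow_m1, zpow_mul, zpow_1. Qed.

Lemma zpow_inv (x : L) n : zpow (inv x) n = zpow x (- n).
Proof. rewrite <- zpow_m1, zpow_mul. f_equal; lia. Qed.

Lemma inv_inj (x y : L) : inv x = inv y -> x = y.
Proof. intros E. now rewrite <- (inv_inv x), E, inv_inv. Qed.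

Lemma zpow_2 (x : L) : zpow x 2 = lmul x x.
Proof. change 2 with (1 + 1). now rewrite zpow_add, zpow_1. Qed.

Lemma inv_eq_self_iff (x : L) : inv x = x <-> zpow x 2 = lone.
Proof.
  rewrite zpow_2. split.
  - intros E. rewrite <- E at 2. apply mul_inv_r.
  - intros E. symmetry. now apply inv_unique.
Qed.

Lemma inv_neq_one (x : L) : x <> lone -> inv x <> lone.
Proof. intros Hx E. apply Hx. now rewrite <- (inv_inv x), E, inv_one. Qed.

End Powers.

Section Torsion.
Context {L : Loop} `{power_assoc L}.

Definition torsion (x : L) : Prop := exists k, 0 < k /\ zpow x k = lone.

Definition is_order (x : L) (K : Z) : Prop :=
  0 < K /\ zpow x K = lone /\ forall k, 0 < k < K -> zpow x k <> lone.

Lemma torsion_of_zpow_eq_one (x : L) k : k <> 0 -> zpow x k = lone -> torsion x.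
Proof.
  intros Hk E. destruct (Z_lt_le_dec 0 k); [now exists k|].
  exists (- k). split; [lia|]. now rewrite zpow_opp, E, inv_one.
Qed.

Lemma torsion_one : torsion (@lone L).
Proof. exists 1. split; [lia | apply zpow_1]. Qed.

Lemma zpow_period (x : L) K q : zpow x K = lone -> zpow x (K * q) = lone.
Proof. intros E. now rewrite <- zpow_mul, E, zpow_one. Qed.

Lemma zpow_mod (x : L) K n : 0 < K -> zpow x K = lone -> zpow x n = zpow x (n mod K).
Proof.
  intros HK E. rewrite (Z_div_mod_eq_full n K) at 1.
  now rewrite zpow_add, zpow_period, one_mul.
Qed.

Lemma torsion_zpow (x : L) n : torsion x -> torsion (zpow x n).
Proof.
  intros [k [Hk E]]. exists k. split; [easy|].
  rewrite zpow_mul, Z.mul_comm. now apply zpow_period.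
Qed.

Lemma torsion_zpow_inv (x : L) n : n <> 0 -> torsion (zpow x n) -> torsion x.
Proof.
  intros Hn [k [Hk E]]. apply (torsion_of_zpow_eq_one x (n * k)); [lia|].
  now rewrite <- zpow_mul.
Qed.

Lemma torsion_inv (x : L) : torsion (inv x) <-> torsion x.
Proof.
  rewrite <- zpow_m1. split; [apply torsion_zpow_inv; lia | apply torsion_zpow].
Qed.

Lemma zpow_inj (x : L) a b : ~ torsion x -> zpow x a = zpow x b -> a = b.
Proof.
  intros Hx E. apply NNPP. intros Hab. apply Hx, (torsion_of_zpow_eq_one x (a - b)); [lia|].
  now rewrite <- Z.add_opp_r, zpow_add, zpow_opp, E, mul_inv_r.
Qed.

Lemma torsion_has_order (x : L) : torsion x -> exists K, is_order x K.
Proof.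
  intros [k [Hk E]].
  destruct (dec_inh_nat_subset_has_unique_least_element
              (fun m => 0 < Z.of_nat m /\ zpow x (Z.of_nat m) = lone))
    as [m [[[Hm Em] Hmin] _]].
  - intros m. apply classic.
  - exists (Z.to_nat k). now rewrite Z2Nat.id by lia.
  - exists (Z.of_nat m). repeat split; auto. intros j Hj Ej.
    enough (m <= Z.to_nat j)%nat by lia.
    apply Hmin. rewrite Z2Nat.id by lia. split; [lia | easy].
Qed.

End Torsion.

(** * Power graphs *)

Section PowerGraphs.
Context {L : Loop}.

Definition pow_related (S : Z -> Prop) (x z : L) : Prop :=
  exists n, S n /\ (z = zpow x n \/ x = zpow z n).

Lemma pgraph_adj_sym S (x y : L) : pgraph_adj S L x y -> pgraph_adj S L y x.
Proof. intros [Hxy [n [Sn H]]]. split; auto. exists n; tauto. Qed.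

Lemma pgraph_adj_irrefl S (x : L) : ~ pgraph_adj S L x x.
Proof. now intros [H _]. Qed.

Lemma pgraph_adj_iff S (x y : L) : pgraph_adj S L x y <-> x <> y /\ pow_related S x y.
Proof.
  unfold pgraph_adj, pow_related. setoid_rewrite is_pow_iff. reflexivity.
Qed.

Lemma pow_related_refl S (x : L) : S 1 -> pow_related S x x.
Proof. exists 1. split; auto. left. now rewrite zpow_1. Qed.

Lemma pgraph_closed_nbr S (x z : L) : S 1 -> (z = x \/ pgraph_adj S L x z) <-> pow_related S x z.
Proof.
  intros S1. rewrite pgraph_adj_iff. split.
  - intros [->|[_ H]]; auto using pow_related_refl.
  - intros H. destruct (classic (z = x)); auto.
Qed.

Lemma pgraph_closed_twins_iff S (x y : L) : S 1 ->
  closed_twins (pgraph_adj S L) x y <-> forall z, pow_related S x z <-> pow_related S y z.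
Proof. intros S1. unfold closed_twins. now setoid_rewrite pgraph_closed_nbr. Qed.

Context `{power_assoc L}.

Lemma pow_related_of_powers S (x y : L) a b :
  (forall m n, S m -> S n -> S (m * n)) -> S a -> S b -> x = zpow y a -> y = zpow x b ->
  forall z, pow_related S x z -> pow_related S y z.
Proof.
  intros Smul Sa Sb Hx Hy z [n [Sn [E|E]]].
  - exists (a * n). split; auto. left. now rewrite E, Hx, zpow_mul.
  - exists (n * b). split; auto. right. now rewrite Hy, E, zpow_mul.
Qed.

Lemma pgraph_twins_of_powers S (x y : L) a b : S 1 ->
  (forall m n, S m -> S n -> S (m * n)) -> S a -> S b -> x = zpow y a -> y = zpow x b ->
  closed_twins (pgraph_adj S L) x y.
Proof.
  intros S1 Smul Sa Sb Hx Hy. apply pgraph_closed_twins_iff; auto.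
  split; [apply (pow_related_of_powers S x y a b) | apply (pow_related_of_powers S y x b a)]; auto.
Qed.

Lemma pgraph_twins_inv S (x : L) : S 1 -> S (-1) ->
  (forall m n, S m -> S n -> S (m * n)) -> closed_twins (pgraph_adj S L) x (inv x).
Proof.
  intros. apply (pgraph_twins_of_powers S x (inv x) (-1) (-1)); auto.
  - now rewrite zpow_m1, inv_inv.
  - now rewrite zpow_m1.
Qed.

Lemma pow_related_inv S (x y : L) : pow_related S x y -> pow_related S (inv x) (inv y).
Proof.
  intros [n [Sn [E|E]]]; exists n; split; auto; [left|right];
    now rewrite E, zpow_inv, zpow_opp.
Qed.

Lemma pgraph_adj_inv S (x y : L) : pgraph_adj S L x y <-> pgraph_adj S L (inv x) (inv y).
Proof.
  rewrite !pgraph_adj_iff. split; intros [Hxy Hr]; split.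
  - intros E. now apply Hxy, inv_inj.
  - now apply pow_related_inv.
  - intros ->. auto.
  - apply pow_related_inv in Hr. now rewrite !inv_inv in Hr.
Qed.

Lemma torsion_pow_related S (x y : L) : (forall n, S n -> n <> 0) ->
  pow_related S x y -> torsion x <-> torsion y.
Proof.
  intros HS [n [Sn [->| ->]]]; split; auto using torsion_zpow;
    apply (torsion_zpow_inv _ n); auto.
Qed.

Lemma torsion_pgraph_adj S (x y : L) : (forall n, S n -> n <> 0) ->
  pgraph_adj S L x y -> torsion x <-> torsion y.
Proof. intros HS A. apply pgraph_adj_iff in A. now apply (torsion_pow_related S). Qed.

Lemma pgraph_adj_one S (z : L) : (forall n, S n -> n <> 0) -> (forall n, 0 < n -> S n) ->
  pgraph_adj S L lone z <-> z <> lone /\ torsion z.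
Proof.
  intros HS HP. rewrite pgraph_adj_iff. split.
  - intros [Hz [n [Hn [E|E]]]].
    + rewrite zpow_one in E. now subst.
    + split; auto. apply (torsion_of_zpow_eq_one z n); [now apply HS | now symmetry].
  - intros [Hz [k [Hk E]]]. split; auto. exists k. auto.
Qed.

Lemma nontorsion_nonadjacent_nbrs S (x : L) : ~ torsion x -> S 2 -> S 3 ->
  (forall n, S n -> 0 < n \/ n < 0) -> has_nonadjacent_nbrs (pgraph_adj S L) x.
Proof.
  intros Hx S2 S3 HS. exists (zpow x 2), (zpow x 3).
  assert (Hinj := fun a b => zpow_inj x a b Hx).
  rewrite !pgraph_adj_iff. repeat split.
  - rewrite <- (zpow_1 x) at 1. intros E. apply Hinj in E. lia.
  - exists 2; auto.
  - rewrite <- (zpow_1 x) at 1. intros E. apply Hinj in E. lia.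
  - exists 3; auto.
  - intros E. apply Hinj in E. lia.
  - intros [_ [k [Sk [E|E]]]]; rewrite zpow_mul in E; apply Hinj in E;
      destruct (HS k Sk); lia.
Qed.

End PowerGraphs.

(** * Each of the graphs detects torsion *)

Definition punctured_power_adj (L : Loop) (x y : L) : Prop :=
  power_adj L x y /\ x <> lone /\ y <> lone.

Section NonTorsion.
Context {L : Loop} `{power_assoc L}.

Lemma nontorsion_twin_zpow S (x : L) n : (forall m, S m -> m <> 0) ->
  S 1 -> S n -> S (2 * n + 1) -> ~ torsion x ->
  closed_twins (pgraph_adj S L) x (zpow x n) -> n = 1 \/ n = -1.
Proof.
  intros HS S1 Sn Sm Hx T. rewrite pgraph_closed_twins_iff in T by auto.
  (* x^(2n+1) is a power of x, hence related to x^n; compare exponents *)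
  destruct (proj1 (T (zpow x (2 * n + 1)))) as [k [Sk [E|E]]].
  - exists (2 * n + 1). auto.
  - rewrite zpow_mul in E. apply zpow_inj in E; auto.
    assert (Hn : n * (k - 2) = 1) by lia. apply Z.eq_mul_1 in Hn. lia.
  - rewrite zpow_mul in E. apply zpow_inj in E; auto.
    pose proof (HS k Sk). pose proof (HS n Sn). nia.
Qed.

Lemma nontorsion_twins S (x y : L) : (forall m, S m -> m <> 0) ->
  S 1 -> (forall n, S n -> S (2 * n + 1)) -> ~ torsion x ->
  closed_twins (pgraph_adj S L) x y -> y = x \/ (S (-1) /\ y = inv x).
Proof.
  intros HS S1 Sodd Hx T.
  assert (Hr : pow_related S x y) by (apply pgraph_closed_nbr, T; auto).
  destruct Hr as [n [Sn [->| ->]]].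
  - destruct (nontorsion_twin_zpow S x n) as [->| ->]; auto.
    + left. apply zpow_1.
    + right. rewrite zpow_m1. auto.
  - assert (Hy : ~ torsion y) by (intro; now apply Hx, torsion_zpow).
    destruct (nontorsion_twin_zpow S y n) as [->| ->]; auto using closed_twins_sym.
    + left. now rewrite zpow_1.
    + right. now rewrite zpow_m1, inv_inv.
Qed.

Lemma inv_neq_nontorsion (x : L) : ~ torsion x -> inv x <> x.
Proof.
  intros Hx E. apply inv_eq_self_iff in E. apply Hx, (torsion_of_zpow_eq_one x 2); auto; lia.
Qed.

Lemma zpm_twins_inv (x : L) : closed_twins (powerZpm_adj L) x (inv x).
Proof. apply pgraph_twins_inv; lia. Qed.

Lemma zpm_twins_nontorsion (x y : L) : ~ torsion x ->
  closed_twins (powerZpm_adj L) x y <-> y = x \/ y = inv x.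
Proof.
  intros Hx. split.
  - intros T. destruct (nontorsion_twins (fun n => n <> 0) x y) as [|[_ ?]]; auto; lia.
  - intros [-> | ->]; auto using closed_twins_refl, zpm_twins_inv.
Qed.

Lemma npow_twins_nontorsion (x y : L) : ~ torsion x ->
  closed_twins (powerN_adj L) x y -> y = x.
Proof.
  intros Hx T. destruct (nontorsion_twins (fun n => 0 < n) x y) as [|[? _]]; auto; lia.
Qed.

Lemma zpm_nontorsion_typical (x : L) : ~ torsion x ->
  unique_twin_nonclique (powerZpm_adj L) x.
Proof.
  intros Hx. split.
  - exists (inv x). split; [|split]; auto using inv_neq_nontorsion, zpm_twins_inv.
    intros t T. apply zpm_twins_nontorsion in T; auto.
  - apply nontorsion_nonadjacent_nbrs; auto; lia.
Qed.

Lemma npow_nontorsion_typical (x : L) : ~ torsion x ->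
  twin_free_nonclique (powerN_adj L) x.
Proof.
  intros Hx. split.
  - intros t T. now apply npow_twins_nontorsion in T.
  - apply nontorsion_nonadjacent_nbrs; auto; lia.
Qed.

Lemma nontorsion_zpm_step (x y : L) : ~ torsion x -> powerZpm_adj L x y -> ~ torsion y.
Proof. intros Hx A. rewrite <- (torsion_pgraph_adj (fun n => n <> 0) x y); auto. Qed.

Lemma nontorsion_npow_step (x y : L) : ~ torsion x -> powerN_adj L x y -> ~ torsion y.
Proof. intros Hx A. rewrite <- (torsion_pgraph_adj (fun n => 0 < n) x y); auto; lia. Qed.

Lemma punctured_power_adj_iff (x y : L) :
  punctured_power_adj L x y <-> powerZpm_adj L x y /\ x <> lone /\ y <> lone.
Proof.
  unfold punctured_power_adj, power_adj, powerZpm_adj. rewrite !pgraph_adj_iff.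
  split; intros [[Hxy [n [Sn E]]] [Hx Hy]]; repeat split; auto; exists n; split; auto.
  (* the exponent 0 would produce the identity *)
  intros ->. now destruct E as [->| ->].
Qed.

Lemma punctured_power_adj_nontorsion (x y : L) : ~ torsion x ->
  punctured_power_adj L x y <-> powerZpm_adj L x y.
Proof.
  intros Hx. rewrite punctured_power_adj_iff. split; [tauto|].
  intros A. split; auto. split; intros ->; [apply Hx | apply (nontorsion_zpm_step x lone Hx A)];
    apply torsion_one.
Qed.

Lemma nontorsion_punctured_step (x y : L) : ~ torsion x -> punctured_power_adj L x y -> ~ torsion y.
Proof.
  intros Hx A. apply punctured_power_adj_nontorsion in A; auto.
  now apply (nontorsion_zpm_step x).
Qed.

Lemma punctured_twins_nontorsion (x y : L) : ~ torsion x ->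
  closed_twins (punctured_power_adj L) x y <-> closed_twins (powerZpm_adj L) x y.
Proof.
  intros Hx. destruct (classic (torsion y)) as [Ty|Ty].
  - (* y lies in its own closed neighbourhood, which a torsion vertex cannot share with x *)
    split; intros T; exfalso; destruct (proj2 (T y) (or_introl eq_refl)) as [->|A];
      try easy.
    + now apply (nontorsion_punctured_step x y).
    + now apply (nontorsion_zpm_step x y).
  - split; intros T z; specialize (T z);
      rewrite !punctured_power_adj_nontorsion in * by auto; auto.
Qed.

Lemma punctured_nontorsion_typical (x : L) : ~ torsion x ->
  unique_twin_nonclique (punctured_power_adj L) x.
Proof.
  intros Hx. destruct (zpm_nontorsion_typical x Hx) as [[t [Ht [T U]]] [s [u [Hs [Hu [Hsu N]]]]]].
  split.
  - exists t. split; [easy|]. rewrite punctured_twins_nontorsion by auto. split; auto.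
    intros t' T'. apply U, punctured_twins_nontorsion; auto.
  - assert (Hs' := nontorsion_zpm_step x s Hx Hs).
    exists s, u. rewrite !punctured_power_adj_nontorsion by auto. auto.
Qed.

Lemma zpm_on_component_nontorsion (x : L) : ~ torsion x ->
  on_component (powerZpm_adj L) (unique_twin_nonclique (powerZpm_adj L)) x.
Proof.
  apply (on_component_of_invariant _ (fun a => ~ torsion a));
    [exact nontorsion_zpm_step | exact zpm_nontorsion_typical].
Qed.

Lemma npow_on_component_nontorsion (x : L) : ~ torsion x ->
  on_component (powerN_adj L) (twin_free_nonclique (powerN_adj L)) x.
Proof.
  apply (on_component_of_invariant _ (fun a => ~ torsion a));
    [exact nontorsion_npow_step | exact npow_nontorsion_typical].
Qed.

Lemma punctured_on_component_nontorsion (x : L) : ~ torsion x ->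
  on_component (punctured_power_adj L) (unique_twin_nonclique (punctured_power_adj L)) x.
Proof.
  apply (on_component_of_invariant _ (fun a => ~ torsion a));
    [exact nontorsion_punctured_step | exact punctured_nontorsion_typical].
Qed.

End NonTorsion.

Section SmallOrders.
Context {L : Loop} `{power_assoc L}.

Lemma zpow_period_cases (w : L) K m : 0 < K -> zpow w K = lone ->
  exists j, 0 <= j < K /\ zpow w m = zpow w j.
Proof.
  intros HK E. exists (m mod K). split; [now apply Z.mod_pos_bound|]. now apply zpow_mod.
Qed.

Lemma zpow_involution_cases (w : L) m : zpow w 2 = lone -> zpow w m = lone \/ zpow w m = w.
Proof.
  intros E. destruct (zpow_period_cases w 2 m) as [j [Hj ->]]; auto; [lia|].
  assert (j = 0 \/ j = 1) as [-> | ->] by lia; auto using zpow_1.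
Qed.

Lemma zpow_pred_period (w : L) K : zpow w K = lone -> zpow w (K - 1) = inv w.
Proof.
  intros E. apply inv_unique. rewrite <- (zpow_1 w) at 1. rewrite <- zpow_add.
  now replace (1 + (K - 1)) with K by lia.
Qed.

Lemma zpow_order_three_cases (u : L) n : zpow u 3 = lone ->
  zpow u n = lone \/ zpow u n = u \/ zpow u n = inv u.
Proof.
  intros E. destruct (zpow_period_cases u 3 n) as [j [Hj ->]]; auto; [lia|].
  assert (j = 0 \/ j = 1 \/ j = 2) as [-> | [-> | ->]] by lia; auto.
  - right; left. apply zpow_1.
  - do 2 right. now apply (zpow_pred_period u 3).
Qed.

Lemma zpow_order_four_cases (u : L) n : zpow u 4 = lone ->
  zpow u n = lone \/ zpow u n = u \/ zpow u n = zpow u 2 \/ zpow u n = inv u.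
Proof.
  intros E. destruct (zpow_period_cases u 4 n) as [j [Hj ->]]; auto; [lia|].
  assert (j = 0 \/ j = 1 \/ j = 2 \/ j = 3) as [-> | [-> | [-> | ->]]] by lia; auto.
  - right; left. apply zpow_1.
  - do 3 right. now apply (zpow_pred_period u 4).
Qed.

Lemma odd_period_no_involution (y : L) M n : zpow y (2 * M + 1) = lone ->
  zpow (zpow y n) 2 = lone -> zpow y n = lone.
Proof.
  intros Hy Hd. rewrite zpow_mul in Hd.
  (* n = 2n(M+1) - n(2M+1) *)
  replace n with (n * 2 * (M + 1) + (2 * M + 1) * (- n)) by lia.
  rewrite zpow_add, <- (zpow_mul y (n * 2)), Hd, zpow_one, one_mul.
  now apply zpow_period.
Qed.

End SmallOrders.

Section ZpmTorsion.
Context {L : Loop} `{power_assoc L}.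

Notation R := (powerZpm_adj L).

Lemma zpm_adj_one (z : L) : R lone z <-> z <> lone /\ torsion z.
Proof. apply pgraph_adj_one; lia. Qed.

Lemma zpm_torsion_step (x y : L) : torsion x -> R x y -> torsion y.
Proof. intros Hx A. now rewrite <- (torsion_pgraph_adj (fun n => n <> 0) x y). Qed.

Lemma zpm_nonadjacent_torsion_ne_one (s t : L) : torsion t -> s <> t -> ~ R s t -> s <> lone.
Proof. intros Ht Hst N ->. apply N, zpm_adj_one. auto. Qed.

(* If every vertex reachable from the identity is typical, the unique twin d of the identity
   behaves like -1 in a quaternion group; two elements of order four with square d then give a
   contradiction. *)
Section CentralInvolution.
Hypothesis typical : on_component R (unique_twin_nonclique R) lone.
Variable d : L.
Hypothesis d_ne_one : d <> lone.
Hypothesis d_twin : closed_twins R lone d.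
Hypothesis d_unique : forall t, closed_twins R lone t -> t = lone \/ t = d.

Lemma d_torsion : torsion d.
Proof.
  destruct (proj2 (d_twin d) (or_introl eq_refl)) as [|A]; [congruence|].
  now apply zpm_adj_one in A.
Qed.

Lemma d_adj_torsion u : torsion u -> u <> d -> R d u.
Proof.
  intros Hu Hud. destruct (classic (u = lone)) as [->|Hu1].
  - apply pgraph_adj_sym, zpm_adj_one. auto using d_torsion.
  - destruct (proj1 (d_twin u)) as [|]; auto; [|congruence].
    right. now apply zpm_adj_one.
Qed.

Lemma d_square : zpow d 2 = lone.
Proof.
  apply inv_eq_self_iff.
  destruct (d_unique (inv d)) as [E|E]; auto.
  - eapply closed_twins_trans; [exact d_twin | apply zpm_twins_inv].
  - now apply inv_neq_one in d_ne_one.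
Qed.

Lemma d_power_of_torsion u : torsion u -> u <> lone -> u <> d -> exists n, d = zpow u n.
Proof.
  intros Hu Hu1 Hud. destruct (proj1 (pgraph_adj_iff _ d u) (d_adj_torsion u Hu Hud))
    as [_ [n [_ [E|E]]]]; eauto.
  destruct (zpow_involution_cases d n d_square); congruence.
Qed.

Lemma d_not_power_of_odd_period y M : zpow y (2 * M + 1) = lone -> forall n, d <> zpow y n.
Proof.
  intros Hy n E. apply d_ne_one. rewrite E.
  apply (odd_period_no_involution y M); auto. rewrite <- E. apply d_square.
Qed.

Lemma d_half_order u K : torsion u -> u <> lone -> u <> d -> is_order u K ->
  exists M, K = 2 * M /\ zpow u M = d.
Proof.
  intros Hu Hu1 Hud [HK [EK Hmin]].
  destruct (d_power_of_torsion u) as [n En]; auto.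
  destruct (Z.Even_or_Odd K) as [[M ->]|[M ->]].
  - exists M. split; auto.
    assert (Hw2 : zpow (zpow u M) 2 = lone) by now rewrite zpow_mul, Z.mul_comm.
    apply NNPP. intros Hw.
    assert (Hw1 : zpow u M <> lone) by (apply Hmin; lia).
    destruct (d_power_of_torsion (zpow u M)) as [m Em]; auto using torsion_zpow.
    destruct (zpow_involution_cases (zpow u M) m Hw2); congruence.
  - exfalso. now apply (d_not_power_of_odd_period u M EK n).
Qed.

Lemma typical_torsion_order_four u : torsion u -> u <> lone -> u <> d -> has_unique_twin R u ->
  zpow u 4 = lone /\ zpow u 2 = d.
Proof.
  intros Hu Hu1 Hud Tu. destruct (torsion_has_order u Hu) as [K HKo].
  destruct (d_half_order u K Hu Hu1 Hud HKo) as [M [-> HM]].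
  destruct HKo as [HK [EK Hmin]].
  assert (M <> 1) by (intros ->; apply Hud; now rewrite <- (zpow_1 u)).
  destruct (Z.Even_or_Odd M) as [[P ->]|[P ->]].
  - destruct (Z.eq_dec P 1) as [->|HP]; [easy|exfalso].
    (* for P > 1, u^(2P+1) is a third twin of u, besides u and u^-1 *)
    apply (not_unique_twin_of_two_twins R u (inv u) (zpow u (2 * P + 1))); auto.
    + rewrite inv_eq_self_iff. apply Hmin. lia.
    + intros F. apply (Hmin (2 * P)); [lia|]. apply (mul_cancel_l _ _ u).
      now rewrite mul_one, <- zpow_succ, <- Z.add_1_r.
    + intros F. apply (Hmin (2 * P + 2)); [lia|].
      replace (2 * P + 2) with (Z.succ (2 * P + 1)) by lia.
      now rewrite zpow_succ, <- F, mul_inv_r.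
    + apply zpm_twins_inv.
    + apply (pgraph_twins_of_powers _ u _ (2 * P + 1) (2 * P + 1)); auto; try lia.
      rewrite zpow_mul. replace ((2 * P + 1) * (2 * P + 1)) with (2 * (2 * P) * (P + 1) + 1) by lia.
      now rewrite zpow_add, zpow_period, one_mul, zpow_1.
  - exfalso. assert (Hu2 : zpow u 2 <> lone) by (apply Hmin; lia).
    assert (Hu2d : zpow u 2 <> d).
    { intros F. apply (Hmin 4); [lia|]. change 4 with (2 * 2).
      now rewrite <- zpow_mul, F, d_square. }
    destruct (d_power_of_torsion (zpow u 2)) as [m Em]; auto using torsion_zpow.
    apply (d_not_power_of_odd_period (zpow u 2) P) with m; auto.
    now rewrite zpow_mul.
Qed.

Lemma zpm_central_involution_absurd : False.
Proof.
  pose proof d_torsion as Td.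
  assert (Rld : R lone d) by (apply zpm_adj_one; auto).
  destruct (typical d (rt_step _ _ _ _ Rld)) as [_ [s [t [Rs [Rt [Hst Nst]]]]]].
  assert (Ts := zpm_torsion_step d s Td Rs). assert (Tt := zpm_torsion_step d t Td Rt).
  assert (Hs1 : s <> lone) by now apply (zpm_nonadjacent_torsion_ne_one s t).
  assert (Hsd : s <> d) by (intros ->; now apply pgraph_adj_irrefl in Rs).
  assert (Rls : R lone s) by (apply zpm_adj_one; auto).
  destruct (typical s (rt_step _ _ _ _ Rls)) as [Us [r [t' [Rr [Rt' [Hrt Nrt]]]]]].
  destruct (typical_torsion_order_four s Ts Hs1 Hsd Us) as [Es4 Es2].
  assert (Tr := zpm_torsion_step s r Ts Rr). assert (Tt' := zpm_torsion_step s t' Ts Rt').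
  assert (Hr1 : r <> lone) by now apply (zpm_nonadjacent_torsion_ne_one r t').
  assert (Hrd : r <> d) by (intros ->; apply Nrt, d_adj_torsion; congruence).
  assert (Hrs : r <> s) by (intros ->; now apply pgraph_adj_irrefl in Rr).
  assert (Hri : r <> inv s).
  { intros ->. destruct (proj1 (zpm_twins_inv s t') (or_intror Rt')); congruence. }
  assert (Rlr : R lone r) by (apply zpm_adj_one; auto).
  destruct (typical r (rt_step _ _ _ _ Rlr)) as [Ur _].
  destruct (typical_torsion_order_four r Tr Hr1 Hrd Ur) as [Er4 Er2].
  (* s and r both have order four and square d, so neither is a power of the other *)
  destruct (proj1 (pgraph_adj_iff _ s r) Rr) as [_ [n [_ [E|E]]]].
  - destruct (zpow_order_four_cases s n Es4) as [F|[F|[F|F]]]; congruence.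
  - destruct (zpow_order_four_cases r n Er4) as [F|[F|[F|F]]]; try congruence.
    apply Hri. now rewrite E, F, inv_inv.
Qed.
End CentralInvolution.

Lemma zpm_identity_component_atypical : ~ on_component R (unique_twin_nonclique R) lone.
Proof.
  intros typical. destruct (typical lone (rt_refl _ _ _)) as [[d [Hd [T U]]] _].
  now apply (zpm_central_involution_absurd typical d).
Qed.

Lemma zpm_on_component_iff (x : L) :
  on_component R (unique_twin_nonclique R) x <-> ~ torsion x.
Proof.
  split; [|apply zpm_on_component_nontorsion].
  intros Hx Tx. apply zpm_identity_component_atypical.
  destruct (classic (x = lone)) as [->|Hx1]; auto.
  apply (on_component_step _ _ x); auto.
  apply pgraph_adj_sym, zpm_adj_one. auto.
Qed.
End ZpmTorsion.

Section NpowTorsion.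
Context {L : Loop} `{power_assoc L}.

Notation R := (powerN_adj L).

Lemma npow_adj_one (z : L) : R lone z <-> z <> lone /\ torsion z.
Proof. apply pgraph_adj_one; lia. Qed.

Lemma npow_torsion_step (x y : L) : torsion x -> R x y -> torsion y.
Proof. intros Hx A. rewrite <- (torsion_pgraph_adj (fun n => 0 < n) x y); auto; lia. Qed.

Lemma npow_twins_inv_torsion (x : L) : torsion x -> x <> lone -> closed_twins R x (inv x).
Proof.
  intros [k [Hk E]] Hx.
  assert (k <> 1) by (intros ->; apply Hx; now rewrite <- (zpow_1 x)).
  (* inside a cyclic group of period k, x and x^-1 = x^(k-1) are positive powers of each other *)
  apply (pgraph_twins_of_powers _ x _ (k - 1) (k - 1)); auto; try lia.
  - rewrite zpow_inv. replace (- (k - 1)) with (1 + k * (-1)) by lia.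
    now rewrite zpow_add, zpow_period, mul_one, zpow_1.
  - symmetry. now apply zpow_pred_period.
Qed.

Section IdentityComponent.
Hypothesis typical : on_component R (twin_free_nonclique R) lone.

Lemma npow_reachable_involution w : clos_refl_trans L R lone w -> w <> lone -> zpow w 2 = lone.
Proof.
  intros Hw Hw1. apply inv_eq_self_iff, (typical w Hw).
  apply npow_twins_inv_torsion; auto.
  apply (on_component_of_invariant R torsion torsion lone); auto using torsion_one.
  exact npow_torsion_step.
Qed.

Lemma npow_identity_component_absurd : False.
Proof.
  destruct (typical lone (rt_refl _ _ _)) as [_ [s [_ [Rs [_ [_ _]]]]]].
  destruct (proj1 (npow_adj_one s) Rs) as [Hs1 _].
  assert (Hrs : clos_refl_trans L R lone s) by now apply rt_step.
  pose proof (npow_reachable_involution s Hrs Hs1) as Hs2.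
  destruct (typical s Hrs) as [_ [a [b [Ra [Rb [Hab _]]]]]].
  (* a neighbour c of the involution s is an involution too, hence equal to the identity *)
  assert (Nbr : forall c, R s c -> c = lone).
  { intros c Rc. apply NNPP. intros Hc1.
    assert (Hc2 : zpow c 2 = lone).
    { apply npow_reachable_involution; auto. eapply rt_trans; [exact Hrs | now apply rt_step]. }
    destruct (proj1 (pgraph_adj_iff _ s c) Rc) as [Hsc [n [_ [E|E]]]].
    - destruct (zpow_involution_cases s n Hs2); congruence.
    - destruct (zpow_involution_cases c n Hc2); congruence. }
  apply Hab. now rewrite (Nbr a Ra), (Nbr b Rb).
Qed.
End IdentityComponent.

Lemma npow_on_component_iff (x : L) :
  on_component R (twin_free_nonclique R) x <-> ~ torsion x.
Proof.
  split; [|apply npow_on_component_nontorsion].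
  intros Hx Tx. apply npow_identity_component_absurd.
  destruct (classic (x = lone)) as [->|Hx1]; auto.
  apply (on_component_step _ _ x); auto.
  apply pgraph_adj_sym, npow_adj_one. auto.
Qed.

End NpowTorsion.

Section PuncturedTorsion.
Context {L : Loop} `{power_assoc L}.

Notation R := (punctured_power_adj L).

Lemma punctured_closed_nbr (x z : L) : x <> lone ->
  (z = x \/ R x z) <-> pow_related (fun _ => True) x z /\ z <> lone.
Proof.
  intros Hx. rewrite <- pgraph_closed_nbr by easy. unfold R, punctured_power_adj, power_adj.
  split; [intros [->|[A [_ Hz]]]|intros [[->|A] Hz]]; auto.
Qed.

Lemma punctured_twins_of_powers (x y : L) a b : x <> lone -> y <> lone ->
  x = zpow y a -> y = zpow x b -> closed_twins R x y.
Proof.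
  intros Hx Hy Ex Ey z. rewrite !punctured_closed_nbr by auto.
  split; intros [Hr Hz]; split; auto;
    [apply (pow_related_of_powers _ x y a b) | apply (pow_related_of_powers _ y x b a)]; auto.
Qed.

Lemma punctured_twins_inv (x : L) : x <> lone -> closed_twins R x (inv x).
Proof.
  intros Hx. apply (punctured_twins_of_powers x (inv x) (-1) (-1)); auto using inv_neq_one.
  - now rewrite zpow_m1, inv_inv.
  - now rewrite zpow_m1.
Qed.

Lemma punctured_involution_no_unique_twin (w : L) : w <> lone -> zpow w 2 = lone ->
  ~ has_unique_twin R w.
Proof.
  intros Hw1 Hw2 [t [Ht [T U]]].
  destruct (proj2 (T t) (or_introl eq_refl)) as [|A]; [congruence|].
  apply punctured_power_adj_iff in A as [A [_ Ht1]].
  destruct (proj1 (pgraph_adj_iff _ w t) A) as [_ [n [_ [E|E]]]].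
  { destruct (zpow_involution_cases w n Hw2); congruence. }
  assert (Ht2 : zpow t 2 <> lone) by
    (intros Ht2; destruct (zpow_involution_cases t n Ht2); congruence).
  destruct (U (inv t)) as [E'|E'].
  - eapply closed_twins_trans; [exact T | now apply punctured_twins_inv].
  - apply Ht. rewrite <- (inv_inv t), E'. now apply inv_eq_self_iff.
  - now apply Ht2, inv_eq_self_iff.
Qed.

Section Component.
Variable v : L.
Hypothesis typical : on_component R (unique_twin_nonclique R) v.

Lemma punctured_reachable_order_three s : clos_refl_trans L R v s -> torsion s -> s <> lone ->
  zpow s 3 = lone.
Proof.
  intros Hs Ts Hs1. destruct (torsion_has_order s Ts) as [K [HK [EK Hmin]]].
  destruct (Z.Even_or_Odd K) as [[M ->]|[M ->]].
  - exfalso. assert (Hw1 : zpow s M <> lone) by (apply Hmin; lia).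
    assert (Hw2 : zpow (zpow s M) 2 = lone) by now rewrite zpow_mul, Z.mul_comm.
    apply (punctured_involution_no_unique_twin (zpow s M)); auto.
    enough (Hr : clos_refl_trans L R v (zpow s M)) by exact (proj1 (typical _ Hr)).
    destruct (classic (zpow s M = s)) as [->|Hne]; auto.
    eapply rt_trans; [exact Hs|]. apply rt_step, punctured_power_adj_iff.
    repeat split; auto. apply pgraph_adj_iff. split; auto. exists M. split; auto; lia.
  - assert (M <> 0) by (intros ->; now rewrite <- (zpow_1 s) in Hs1).
    apply NNPP. intros Hs3.
    (* otherwise s has the two distinct twins s^-1 and s^2 *)
    apply (not_unique_twin_of_two_twins R s (inv s) (zpow s 2));
      [| | | | |apply (proj1 (typical _ Hs))].
    + now rewrite inv_eq_self_iff; apply Hmin; lia.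
    + rewrite zpow_2. intros E. apply Hs1, (mul_cancel_l _ _ s). now rewrite E, mul_one.
    + intros E. apply Hs3. change 3 with (1 + 2). now rewrite zpow_add, zpow_1, <- E, mul_inv_r.
    + now apply punctured_twins_inv.
    + apply (punctured_twins_of_powers s (zpow s 2) (M + 1) 2); auto.
      * intros E. apply Hmin in E; auto. lia.
      * rewrite zpow_mul. replace (2 * (M + 1)) with ((2 * M + 1) + 1) by lia.
        now rewrite zpow_add, EK, one_mul, zpow_1.
Qed.

Lemma punctured_component_absurd : torsion v -> v <> lone -> False.
Proof.
  intros Tv Hv1. assert (Hv3 := punctured_reachable_order_three v (rt_refl _ _ _) Tv Hv1).
  destruct (typical v (rt_refl _ _ _)) as [_ [s [t [Rs [Rt [Hst Nst]]]]]].
  assert (Hsi : s <> inv v).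
  { intros ->. destruct (proj1 (punctured_twins_inv v Hv1 t) (or_intror Rt)); congruence. }
  pose proof Rs as A. apply punctured_power_adj_iff in A as [A [_ Hs1]].
  destruct (proj1 (pgraph_adj_iff _ v s) A) as [Hvs [n [Hn [E|E]]]].
  - destruct (zpow_order_three_cases v n Hv3) as [F|[F|F]]; congruence.
  - assert (Ts : torsion s) by (apply (torsion_zpow_inv s n); auto; now rewrite <- E).
    assert (Hs3 := punctured_reachable_order_three s (rt_step _ _ _ _ Rs) Ts Hs1).
    destruct (zpow_order_three_cases s n Hs3) as [F|[F|F]]; try congruence.
    apply Hsi. now rewrite E, F, inv_inv.
Qed.
End Component.

Lemma punctured_on_component_iff (x : L) :
  on_component R (unique_twin_nonclique R) x <-> ~ torsion x.
Proof.
  split; [|apply punctured_on_component_nontorsion].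
  intros Hx Tx. destruct (classic (x = lone)) as [->|Hx1].
  - (* the identity is isolated *)
    destruct (Hx lone (rt_refl _ _ _)) as [_ [s [_ [[_ [Hl _]] _]]]]. auto.
  - now apply (punctured_component_absurd x).
Qed.
End PuncturedTorsion.

Section TorsionInvariance.
Context {G H : Loop} `{power_assoc G} `{power_assoc H} {f : G -> H} {g : H -> G}.

Lemma iso_torsion_of_component_characterization (RG : G -> G -> Prop) (RH : H -> H -> Prop)
  (PG : G -> Prop) (PH : H -> Prop) : graph_iso_by RG RH f g ->
  (forall x, on_component RG PG x <-> ~ torsion x) ->
  (forall y, on_component RH PH y <-> ~ torsion y) ->
  (forall a, PG a -> PH (f a)) -> (forall b, PH b -> PG (g b)) ->
  forall x, torsion x <-> torsion (f x).
Proof.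
  intros I CG CH Hf Hg x.
  assert (E := iso_preserves_component_characterized I PG (fun a => ~ torsion a) PH
                 (fun b => ~ torsion b) (fun a => iff_sym (CG a)) (fun b => iff_sym (CH b))
                 Hf Hg x).
  split; intros T; apply NNPP; tauto.
Qed.

Lemma zpm_iso_torsion : graph_iso_by (powerZpm_adj G) (powerZpm_adj H) f g ->
  forall x, torsion x <-> torsion (f x).
Proof.
  intros I. apply (iso_torsion_of_component_characterization _ _ _ _ I
    zpm_on_component_iff zpm_on_component_iff (iso_unique_twin_nonclique I)
    (iso_unique_twin_nonclique (graph_iso_by_sym I))).
Qed.

Lemma npow_iso_torsion : graph_iso_by (powerN_adj G) (powerN_adj H) f g ->
  forall x, torsion x <-> torsion (f x).
Proof.
  intros I. apply (iso_torsion_of_component_characterization _ _ _ _ I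
    npow_on_component_iff npow_on_component_iff (iso_twin_free_nonclique I)
    (iso_twin_free_nonclique (graph_iso_by_sym I))).
Qed.

Lemma punctured_iso_torsion :
  graph_iso_by (punctured_power_adj G) (punctured_power_adj H) f g ->
  forall x, torsion x <-> torsion (f x).
Proof.
  intros I. apply (iso_torsion_of_component_characterization _ _ _ _ I
    punctured_on_component_iff punctured_on_component_iff (iso_unique_twin_nonclique I)
    (iso_unique_twin_nonclique (graph_iso_by_sym I))).
Qed.

End TorsionInvariance.

(** * The power graph and the Z^{+-}-power graph *)

Section PowerVersusZpm.
Context {L : Loop} `{power_assoc L}.

Lemma pgraph_adj_mono (S S' : Z -> Prop) (x y : L) :
  (forall n, S n -> S' n) -> pgraph_adj S L x y -> pgraph_adj S' L x y.
Proof. intros HS [Hxy [n [Sn E]]]. split; auto. exists n; auto. Qed.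

Lemma power_adj_one (z : L) : z <> lone -> power_adj L lone z.
Proof. intros Hz. split; [congruence|]. exists 0. split; [easy | now right]. Qed.

Lemma power_adj_iff_zpm (x y : L) :
  power_adj L x y <-> powerZpm_adj L x y \/ (x <> y /\ (x = lone \/ y = lone)).
Proof.
  split.
  - intros A. pose proof A as [Hxy [n [_ E]]].
    destruct (Z.eq_dec n 0) as [->|Hn].
    + right. split; auto. now destruct E; [right|left].
    + left. split; auto. now exists n.
  - intros [A|[Hxy [->| ->]]].
    + revert A. now apply pgraph_adj_mono.
    + now apply power_adj_one.
    + now apply pgraph_adj_sym, power_adj_one.
Qed.

Lemma zpm_adj_iff_power (x y : L) :
  powerZpm_adj L x y <-> power_adj L x y /\ (x = lone -> torsion y) /\ (y = lone -> torsion x).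
Proof.
  rewrite power_adj_iff_zpm. split.
  - intros A. split; auto. split; intros ->.
    + now apply zpm_adj_one in A.
    + now apply pgraph_adj_sym, zpm_adj_one in A.
  - intros [[A|[Hxy [->| ->]]] [Tx Ty]]; auto.
    + apply zpm_adj_one. auto.
    + apply pgraph_adj_sym, zpm_adj_one. auto.
Qed.

Lemma zpm_closed_nbr_one (z : L) : z = lone \/ powerZpm_adj L lone z <-> torsion z.
Proof.
  rewrite zpm_adj_one. split; [intros [->|[_ ?]]; auto using torsion_one|].
  intros Tz. destruct (classic (z = lone)); auto.
Qed.

End PowerVersusZpm.

Section PowerZpmIsomorphisms.
Context {G H : Loop} `{power_assoc G} `{power_assoc H}.

Lemma zpm_iso_of_power_iso f g : graph_iso_by (power_adj G) (power_adj H) f g ->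
  f lone = lone -> (forall x, torsion x <-> torsion (f x)) ->
  graph_iso_by (powerZpm_adj G) (powerZpm_adj H) f g.
Proof.
  intros I Hf T. pose proof I as [K1 [K2 K3]]. split; auto. split; auto. intros a b.
  rewrite !zpm_adj_iff_power, K3, <- !T, <- Hf, !(iso_eq_image I). tauto.
Qed.

Lemma power_iso_of_zpm_iso f g : graph_iso_by (powerZpm_adj G) (powerZpm_adj H) f g ->
  f lone = lone -> graph_iso_by (power_adj G) (power_adj H) f g.
Proof.
  intros I Hf. pose proof I as [K1 [K2 K3]]. split; auto. split; auto. intros a b.
  rewrite !power_adj_iff_zpm, K3, <- Hf, !(iso_eq_image I).
  assert (f a <> f b <-> a <> b) by (now rewrite (iso_eq_image I)). tauto.
Qed.

Lemma punctured_iso_of_power_iso f g : graph_iso_by (power_adj G) (power_adj H) f g ->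
  f lone = lone -> graph_iso_by (punctured_power_adj G) (punctured_power_adj H) f g.
Proof.
  intros I Hf. pose proof I as [K1 [K2 K3]]. split; auto. split; auto. intros a b.
  unfold punctured_power_adj. rewrite K3, <- Hf, !(iso_eq_image I). tauto.
Qed.

Lemma zpm_iso_of_power_graph_iso :
  graph_iso (power_adj G) (power_adj H) -> graph_iso (powerZpm_adj G) (powerZpm_adj H).
Proof.
  intros [f [g I]].
  (* the identity is a dominating vertex, so it is a closed twin of f lone *)
  assert (T : closed_twins (power_adj H) (f lone) lone).
  { intros z. destruct (iso_surj I z) as [a ->]. rewrite (iso_closed_nbr I).
    split; intros _; [destruct (classic (f a = lone))|destruct (classic (a = lone))];
      auto using power_adj_one. }
  destruct (iso_fixing_point I lone lone (@pgraph_adj_sym H _) (@pgraph_adj_irrefl H _) T)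
    as [f' [g' [I' Hf']]].
  exists f', g'. apply zpm_iso_of_power_iso; auto.
  apply (punctured_iso_torsion (punctured_iso_of_power_iso f' g' I' Hf')).
Qed.

Lemma power_iso_of_zpm_graph_iso :
  graph_iso (powerZpm_adj G) (powerZpm_adj H) -> graph_iso (power_adj G) (power_adj H).
Proof.
  intros [f [g I]].
  (* the closed neighbourhood of the identity is the torsion part, which f preserves *)
  assert (T : closed_twins (powerZpm_adj H) (f lone) lone).
  { intros z. destruct (iso_surj I z) as [a ->].
    rewrite (iso_closed_nbr I), !zpm_closed_nbr_one. apply (zpm_iso_torsion I). }
  destruct (iso_fixing_point I lone lone (@pgraph_adj_sym H _) (@pgraph_adj_irrefl H _) T)
    as [f' [g' [I' Hf']]].
  exists f', g'. now apply power_iso_of_zpm_iso.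
Qed.

End PowerZpmIsomorphisms.

(** * The Z^{+-}-power graph and the N-power graph *)

Definition commensurable_by {L : Loop} (S : Z -> Prop) (x y : L) : Prop :=
  exists a b, S a /\ S b /\ zpow x a = zpow y b.

Notation pos_comm := (commensurable_by (fun n => 0 < n)).
Notation comm := (commensurable_by (fun n => n <> 0)).

Section Commensurability.
Context {L : Loop} `{power_assoc L}.

Lemma commensurable_refl S (x : L) : S 1 -> commensurable_by S x x.
Proof. now exists 1, 1. Qed.

Lemma commensurable_sym S (x y : L) : commensurable_by S x y -> commensurable_by S y x.
Proof. intros [a [b [Sa [Sb E]]]]. now exists b, a. Qed.

Lemma commensurable_trans S (x y z : L) : (forall m n, S m -> S n -> S (m * n)) ->
  commensurable_by S x y -> commensurable_by S y z -> commensurable_by S x z.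
Proof.
  intros Smul [a [b [Sa [Sb E]]]] [c [d [Sc [Sd F]]]]. exists (a * c), (d * b).
  split; [auto|split; [auto|]].
  now rewrite <- zpow_mul, E, zpow_mul, Z.mul_comm, <- zpow_mul, F, zpow_mul.
Qed.

Lemma comm_trans (x y z : L) : comm x y -> comm y z -> comm x z.
Proof. apply commensurable_trans. intros; nia. Qed.

Lemma pos_comm_trans (x y z : L) : pos_comm x y -> pos_comm y z -> pos_comm x z.
Proof. apply commensurable_trans. intros; nia. Qed.

Lemma commensurable_of_pow_related S (x y : L) : S 1 -> pow_related S x y -> commensurable_by S x y.
Proof.
  intros S1 [n [Sn [->| ->]]].
  - exists n, 1. now rewrite zpow_1.
  - exists 1, n. now rewrite zpow_1.
Qed.

Lemma commensurable_inv S (x y : L) : commensurable_by S x y -> commensurable_by S (inv x) (inv y).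
Proof. intros [a [b [Sa [Sb E]]]]. exists a, b. now rewrite !zpow_inv, !zpow_opp, E. Qed.

Lemma comm_inv_r (x : L) : comm x (inv x).
Proof. exists 1, (-1). rewrite zpow_inv. repeat split; lia. Qed.

Lemma comm_pos_comm_cases (u v : L) : comm u v -> pos_comm u v \/ pos_comm u (inv v).
Proof.
  intros [a [b [Ha [Hb E]]]].
  assert (E' : zpow u (- a) = zpow v (- b)) by now rewrite !zpow_opp, E.
  destruct (Z_lt_le_dec 0 a), (Z_lt_le_dec 0 b).
  - left. now exists a, b.
  - right. exists a, (- b). rewrite zpow_inv, Z.opp_involutive. repeat split; auto; lia.
  - right. exists (- a), b. rewrite zpow_inv. repeat split; auto; lia.
  - left. exists (- a), (- b). repeat split; auto; lia.
Qed.

Lemma not_pos_comm_inv (u : L) : ~ torsion u -> ~ pos_comm u (inv u).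
Proof. intros Hu [a [b [Ha [Hb E]]]]. rewrite zpow_inv in E. apply zpow_inj in E; auto. lia. Qed.

Lemma npow_adj_zpm (u v : L) : powerN_adj L u v -> powerZpm_adj L u v.
Proof. apply pgraph_adj_mono. lia. Qed.

Lemma npow_adj_pos_comm (u v : L) : powerN_adj L u v -> pos_comm u v.
Proof.
  intros A. apply pgraph_adj_iff in A as [_ A]. apply commensurable_of_pow_related; auto; lia.
Qed.

Lemma zpm_adj_comm (u v : L) : powerZpm_adj L u v -> comm u v.
Proof.
  intros A. apply pgraph_adj_iff in A as [_ A]. apply commensurable_of_pow_related; auto; lia.
Qed.

Lemma npow_adj_iff_nontorsion (u v : L) : ~ torsion u -> ~ torsion v ->
  powerN_adj L u v <-> powerZpm_adj L u v /\ pos_comm u v.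
Proof.
  intros Hu Hv. split; [auto using npow_adj_zpm, npow_adj_pos_comm|].
  intros [A [a [b [Ha [Hb F]]]]]. apply pgraph_adj_iff in A as [Huv [n [Hn E]]].
  apply pgraph_adj_iff. split; auto. exists n. split; auto.
  (* the sign of the exponent is forced by the positive commensurability *)
  destruct E as [-> | ->]; rewrite zpow_mul in F; apply zpow_inj in F; auto; nia.
Qed.

Lemma zpm_adj_inv_r (u v : L) : u <> v -> u <> inv v ->
  powerZpm_adj L u v <-> powerZpm_adj L u (inv v).
Proof.
  intros Huv Hui. split; intros A; apply pgraph_adj_sym; apply pgraph_adj_sym in A;
    revert A; apply (closed_twins_nbr _ v (inv v) u); auto using zpm_twins_inv.
Qed.

Lemma zpm_adj_up_to_inv (a b u v : L) : u = a \/ u = inv a -> v = b \/ v = inv b ->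
  b <> a -> b <> inv a -> powerZpm_adj L u v <-> powerZpm_adj L a b.
Proof.
  intros Hu Hv Hba Hbi.
  assert (Zsym : forall x y : L, powerZpm_adj L x y <-> powerZpm_adj L y x)
    by (split; apply pgraph_adj_sym).
  assert (Left : forall w, w = a \/ w = inv a -> powerZpm_adj L w b <-> powerZpm_adj L a b).
  { intros w [-> | ->]; [easy|]. rewrite !(Zsym _ b). symmetry. now apply zpm_adj_inv_r. }
  rewrite <- (Left u Hu). destruct Hv as [-> | ->]; [easy|].
  symmetry. apply zpm_adj_inv_r; destruct Hu as [-> | ->]; intros E.
  - congruence.
  - congruence.
  - apply Hbi. now rewrite E, inv_inv.
  - now apply Hba, inv_inj.
Qed.

Lemma zpm_adj_iff_npow_torsion (x y : L) : torsion x ->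
  powerZpm_adj L x y <-> powerN_adj L x y.
Proof.
  intros Tx. split; [|apply npow_adj_zpm].
  assert (Pos : forall (z : L) n, torsion z -> exists m, 0 < m /\ zpow z n = zpow z m).
  { intros z n [K [HK EK]]. exists (n mod K + K). split.
    - pose proof (Z.mod_pos_bound n K HK). lia.
    - rewrite zpow_add, EK, mul_one. now apply zpow_mod. }
  intros A. apply pgraph_adj_iff in A as [Hxy [n [Hn E]]].
  apply pgraph_adj_iff. split; auto.
  destruct E as [-> | ->].
  - destruct (Pos x n Tx) as [m [Hm E]]. exists m. split; auto.
  - assert (Ty : torsion y) by (apply (torsion_zpow_inv y n); auto).
    destruct (Pos y n Ty) as [m [Hm E]]. exists m. split; auto.
Qed.

Lemma zpm_adj_iff_npow_nontorsion (u v : L) : ~ torsion u -> ~ torsion v ->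
  powerZpm_adj L u v <-> powerN_adj L u v \/ powerN_adj L u (inv v) \/ v = inv u.
Proof.
  intros Hu Hv. assert (Hv' : ~ torsion (inv v)) by now rewrite torsion_inv.
  split.
  - intros A. destruct (classic (v = inv u)) as [|Hvu]; auto.
    assert (Hui : u <> inv v) by (intros ->; apply Hvu; now rewrite inv_inv).
    destruct (comm_pos_comm_cases u v (zpm_adj_comm u v A)) as [P|P].
    + left. apply npow_adj_iff_nontorsion; auto.
    + right; left. apply npow_adj_iff_nontorsion; auto. split; auto.
      apply (zpm_adj_inv_r u v); auto. intros ->. now apply pgraph_adj_irrefl in A.
  - intros [A|[A| ->]].
    + now apply npow_adj_zpm.
    + assert (Huv : u <> v).
      { intros ->. now apply (not_pos_comm_inv v), npow_adj_pos_comm. }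
      assert (Hui : u <> inv v) by (intros ->; now apply pgraph_adj_irrefl in A).
      apply zpm_adj_inv_r; auto. now apply npow_adj_zpm.
    + apply pgraph_adj_iff. split; [now apply not_eq_sym, inv_neq_nontorsion|].
      exists (-1). split; [lia|]. left. now rewrite zpow_m1.
Qed.

Lemma pos_comm_iff_reach (x y : L) : pos_comm x y <-> clos_refl_trans L (powerN_adj L) x y.
Proof.
  split.
  - intros [a [b [Ha [Hb E]]]].
    assert (Up : forall (z : L) c, 0 < c -> clos_refl_trans L (powerN_adj L) z (zpow z c)).
    { intros z c Hc. destruct (classic (zpow z c = z)) as [->|Hne]; [apply rt_refl|].
      apply rt_step, pgraph_adj_iff. split; auto. exists c. split; auto. }
    apply rt_trans with (zpow x a); [now apply Up|]. rewrite E.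
    apply reach_sym; [apply pgraph_adj_sym | now apply Up].
  - induction 1 as [a b A|a|a b c _ IH1 _ IH2].
    + now apply npow_adj_pos_comm.
    + apply commensurable_refl. lia.
    + now apply (pos_comm_trans a b c).
Qed.

End Commensurability.

Lemma npow_iso_pos_comm {G H : Loop} `{power_assoc G} `{power_assoc H} {f : G -> H} {g : H -> G}
  (I : graph_iso_by (powerN_adj G) (powerN_adj H) f g) (x y : G) :
  pos_comm x y -> pos_comm (f x) (f y).
Proof. rewrite !pos_comm_iff_reach. apply (iso_reach I). Qed.

Section Positivity.
Context {L : Loop} `{power_assoc L}.

Definition sign_ref (x : L) : L := epsilon (inhabits lone) (fun r => comm r x).

(* Each commensurability class of non-torsion elements splits into two classes of positive
   commensurability, exchanged by inversion; [positive] picks the one containing [sign_ref]. *)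
Definition positive (x : L) : Prop := pos_comm x (sign_ref x).

Lemma sign_ref_comm (x : L) : comm (sign_ref x) x.
Proof. unfold sign_ref. apply epsilon_spec. exists x. apply commensurable_refl. lia. Qed.

Lemma sign_ref_eq (x y : L) : comm x y -> sign_ref x = sign_ref y.
Proof.
  intros Exy. unfold sign_ref. f_equal. apply functional_extensionality. intros r.
  apply propositional_extensionality.
  split; intros E; [|apply commensurable_sym in Exy];
    now apply (comm_trans _ _ _ E).
Qed.

Lemma positive_inv (x : L) : ~ torsion x -> positive (inv x) <-> ~ positive x.
Proof.
  intros Hx. unfold positive.
  rewrite (sign_ref_eq (inv x) x) by apply commensurable_sym, comm_inv_r.
  pose proof (sign_ref_comm x) as Hr. set (r := sign_ref x) in *. split.
  - intros Pi P. apply (not_pos_comm_inv x Hx).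
    apply (pos_comm_trans _ r); auto using commensurable_sym.
  - intros NP. destruct (comm_pos_comm_cases r x Hr) as [P|P].
    + now apply commensurable_sym in P.
    + now apply commensurable_sym.
Qed.

Lemma positive_iff_pos_comm (u v : L) : ~ torsion u -> comm u v ->
  (positive u <-> positive v) <-> pos_comm u v.
Proof.
  intros Hu Huv. unfold positive. rewrite <- (sign_ref_eq u v Huv).
  pose proof (sign_ref_comm u) as Hr. set (r := sign_ref u) in *. split.
  - intros Same. destruct (comm_pos_comm_cases r u Hr) as [P|P].
    + apply commensurable_sym in P. apply (pos_comm_trans _ r); auto.
      apply commensurable_sym. tauto.
    + (* u and v both lie in the class opposite to r *)
      assert (NPu : ~ pos_comm u r).
      { intros Q. apply (not_pos_comm_inv u Hu), (pos_comm_trans _ r); auto. }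
      destruct (comm_pos_comm_cases r v (comm_trans _ _ _ Hr Huv)) as [Q|Q].
      * exfalso. apply NPu, Same, commensurable_sym, Q.
      * apply commensurable_inv in P. apply commensurable_inv in Q.
        rewrite inv_inv in P, Q. apply (pos_comm_trans _ (inv r)); auto using commensurable_sym.
  - intros P. split; intros Q; eapply pos_comm_trans; eauto using commensurable_sym.
Qed.

Lemma npow_adj_iff_positive (u v : L) : ~ torsion u -> ~ torsion v ->
  powerN_adj L u v <-> powerZpm_adj L u v /\ (positive u <-> positive v).
Proof.
  intros Hu Hv. rewrite npow_adj_iff_nontorsion by auto.
  split; intros [A P]; split; auto; apply (positive_iff_pos_comm u v Hu (zpm_adj_comm u v A)); auto.
Qed.

End Positivity.

Lemma zpm_iso_inv {G H : Loop} `{power_assoc G} `{power_assoc H} {f : G -> H} {g : H -> G}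
  (I : graph_iso_by (powerZpm_adj G) (powerZpm_adj H) f g) (x : G) :
  ~ torsion x -> f (inv x) = inv (f x).
Proof.
  intros Hx.
  assert (Hfx : ~ torsion (f x)) by now rewrite <- (zpm_iso_torsion I).
  pose proof (proj1 (iso_closed_twins I x (inv x)) (zpm_twins_inv x)) as T.
  apply zpm_twins_nontorsion in T as [E|]; auto.
  apply (iso_inj I) in E. now apply inv_neq_nontorsion in E.
Qed.

Definition orient {G H : Loop} (f : G -> H) (x : G) : H :=
  if excluded_middle_informative (~ torsion x /\ ~ (positive (f x) <-> positive x))
  then inv (f x) else f x.

Section Orient.
Context {G H : Loop} (f : G -> H).

Lemma orient_keep (x : G) : (torsion x \/ (positive (f x) <-> positive x)) -> orient f x = f x.
Proof. unfold orient. destruct excluded_middle_informative; tauto. Qed.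

Lemma orient_flip (x : G) : ~ torsion x -> ~ (positive (f x) <-> positive x) ->
  orient f x = inv (f x).
Proof. unfold orient. destruct excluded_middle_informative; tauto. Qed.

Context `{power_assoc G} `{power_assoc H}.

Lemma orient_positive (x : G) : ~ torsion x -> ~ torsion (f x) ->
  (orient f x = f x \/ orient f x = inv (f x)) /\ (positive (orient f x) <-> positive x).
Proof.
  intros Hx Hfx. destruct (classic (positive (f x) <-> positive x)) as [E|E].
  - rewrite orient_keep; auto.
  - rewrite orient_flip, positive_inv; auto. tauto.
Qed.

End Orient.

Section ZpmToNpow.
Context {G H : Loop} `{power_assoc G} `{power_assoc H} {f : G -> H} {g : H -> G}.
Hypothesis I : graph_iso_by (powerZpm_adj G) (powerZpm_adj H) f g.

Let Tf := zpm_iso_torsion I.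

Lemma orient_torsion (x : G) : torsion x <-> torsion (orient f x).
Proof.
  destruct (classic (torsion x)) as [Tx|Tx]; [rewrite orient_keep; auto|].
  assert (Tfx : ~ torsion (f x)) by now rewrite <- Tf.
  destruct (orient_positive f x Tx Tfx) as [[-> | ->] _]; rewrite ?torsion_inv; tauto.
Qed.

Lemma orient_cancel (x : G) : orient g (orient f x) = x.
Proof.
  pose proof I as [K1 _].
  destruct (classic (torsion x)) as [Tx|Tx].
  { rewrite (orient_keep f x), orient_keep; auto. left. now apply Tf. }
  assert (Tfx : ~ torsion (f x)) by now rewrite <- Tf.
  destruct (classic (positive (f x) <-> positive x)) as [E|E].
  - rewrite (orient_keep f x), orient_keep; rewrite ?K1; tauto.
  - assert (Tfx' : ~ torsion (inv (f x))) by now rewrite torsion_inv.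
    rewrite (orient_flip f x), orient_flip; auto.
    + now rewrite (zpm_iso_inv (graph_iso_by_sym I)), K1, !inv_inv.
    + rewrite (zpm_iso_inv (graph_iso_by_sym I)), K1, !positive_inv; auto. tauto.
Qed.

Lemma orient_npow_torsion (x y : G) : torsion x ->
  powerN_adj G x y <-> powerN_adj H (orient f x) (orient f y).
Proof.
  intros Tx. pose proof I as [_ [_ K3]]. rewrite (orient_keep f x) by auto.
  destruct (classic (torsion y)) as [Ty|Ty].
  - rewrite (orient_keep f y) by auto.
    rewrite <- !zpm_adj_iff_npow_torsion by (auto; now apply Tf). apply K3.
  - split; intros A; exfalso; apply Ty.
    + now apply (npow_torsion_step x).
    + apply orient_torsion, (npow_torsion_step (f x)); auto. now apply Tf.
Qed.

Lemma orient_npow (x y : G) : powerN_adj G x y <-> powerN_adj H (orient f x) (orient f y).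
Proof.
  pose proof I as [_ [_ K3]].
  destruct (classic (torsion x)) as [Tx|Tx]; [now apply orient_npow_torsion|].
  destruct (classic (torsion y)) as [Ty|Ty].
  { split; intros A; apply pgraph_adj_sym; apply pgraph_adj_sym in A;
      now apply (orient_npow_torsion y x Ty). }
  assert (Tfx : ~ torsion (f x)) by now rewrite <- Tf.
  assert (Tfy : ~ torsion (f y)) by now rewrite <- Tf.
  destruct (orient_positive f x Tx Tfx) as [Ox Px], (orient_positive f y Ty Tfy) as [Oy Py].
  rewrite !npow_adj_iff_positive, Px, Py; auto; try now rewrite <- orient_torsion.
  destruct (classic (y = x)) as [->|Nxy].
  { split; intros [A _]; now apply pgraph_adj_irrefl in A. }
  destruct (classic (y = inv x)) as [->|Nxi].
  { rewrite positive_inv by auto. tauto. }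
  (* orient only replaces vertices by their twins, which does not affect adjacency *)
  assert (Z : powerZpm_adj H (orient f x) (orient f y) <-> powerZpm_adj H (f x) (f y)).
  { apply zpm_adj_up_to_inv; auto.
    - intros E. now apply Nxy, (iso_inj I).
    - intros E. apply Nxi, (iso_inj I). now rewrite (zpm_iso_inv I). }
  rewrite Z, <- K3. tauto.
Qed.
End ZpmToNpow.

Lemma npow_iso_of_zpm_graph_iso {G H : Loop} `{power_assoc G} `{power_assoc H} :
  graph_iso (powerZpm_adj G) (powerZpm_adj H) -> graph_iso (powerN_adj G) (powerN_adj H).
Proof.
  intros [f [g I]]. exists (orient f), (orient g). split; [|split].
  - exact (orient_cancel I).
  - exact (orient_cancel (graph_iso_by_sym I)).
  - exact (orient_npow I).
Qed.

Lemma npow_inv_automorphism {L : Loop} `{power_assoc L} :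
  graph_iso_by (powerN_adj L) (powerN_adj L) inv inv.
Proof. split; [|split]; [exact inv_inv | exact inv_inv | apply pgraph_adj_inv]. Qed.

Lemma zpm_iso_of_npow_iso {G H : Loop} `{power_assoc G} `{power_assoc H}
  {k : G -> H} {k' : H -> G} :
  graph_iso_by (powerN_adj G) (powerN_adj H) k k' ->
  (forall x, ~ torsion x -> k (inv x) = inv (k x)) ->
  graph_iso_by (powerZpm_adj G) (powerZpm_adj H) k k'.
Proof.
  intros I Kinv. pose proof I as [K1 [K2 K3]]. split; auto. split; auto.
  pose proof (npow_iso_torsion I) as T.
  assert (Tor : forall x y, torsion x -> powerZpm_adj G x y <-> powerZpm_adj H (k x) (k y)).
  { intros x y Tx. rewrite !zpm_adj_iff_npow_torsion; auto. now apply T. }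
  intros x y. destruct (classic (torsion x)) as [Tx|Tx]; [now apply Tor|].
  destruct (classic (torsion y)) as [Ty|Ty].
  { split; intros A; apply pgraph_adj_sym; apply pgraph_adj_sym in A; now apply (Tor y x Ty). }
  assert (Tkx : ~ torsion (k x)) by now rewrite <- T.
  assert (Tky : ~ torsion (k y)) by now rewrite <- T.
  rewrite !zpm_adj_iff_npow_nontorsion, <- (Kinv y), <- (Kinv x), !K3, (iso_eq_image I) by auto.
  tauto.
Qed.

Section NpowToZpm.
Context {G H : Loop} `{power_assoc G} `{power_assoc H} (f : G -> H) (g : H -> G).
Hypothesis I : graph_iso_by (powerN_adj G) (powerN_adj H) f g.

(* Inversion of H pulled back to G; together with the inversion of G it generates a dihedral
   action on G whose rotation is [rot]. *)
Definition conj_inv (x : G) : G := g (inv (f x)).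
Definition rot (x : G) : G := conj_inv (inv x).
Definition rot_back (x : G) : G := inv (conj_inv x).

Let Tf := npow_iso_torsion I.

Lemma conj_inv_involutive (x : G) : conj_inv (conj_inv x) = x.
Proof. pose proof I as [K1 [K2 _]]. unfold conj_inv. now rewrite K2, inv_inv, K1. Qed.

Lemma rot_iso : graph_iso_by (powerN_adj G) (powerN_adj G) rot rot_back.
Proof.
  exact (graph_iso_by_comp (graph_iso_by_comp (graph_iso_by_comp npow_inv_automorphism I)
           npow_inv_automorphism) (graph_iso_by_sym I)).
Qed.

Lemma torsion_conj_inv (x : G) : torsion (conj_inv x) <-> torsion x.
Proof.
  unfold conj_inv. rewrite <- (npow_iso_torsion (graph_iso_by_sym I)), torsion_inv.
  symmetry. apply Tf.
Qed.

Lemma torsion_rot (x : G) : torsion (rot x) <-> torsion x.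
Proof. unfold rot. now rewrite torsion_conj_inv, torsion_inv. Qed.

Lemma not_pos_comm_conj_inv (x : G) : ~ torsion x -> ~ pos_comm x (conj_inv x).
Proof.
  intros Tx P. apply (npow_iso_pos_comm I) in P. unfold conj_inv in P.
  rewrite (proj1 (proj2 I)) in P. apply (not_pos_comm_inv (f x)); auto. now rewrite <- Tf.
Qed.

Lemma rot_inv_rot (y : G) : rot (inv (rot y)) = inv y.
Proof. unfold rot. now rewrite inv_inv, conj_inv_involutive. Qed.

Lemma rot_iter_dihedral n (x : G) : Nat.iter n rot (inv (Nat.iter n rot x)) = inv x.
Proof.
  induction n as [|n IH]; [easy|].
  now rewrite Nat.iter_succ_r, Nat.iter_succ, rot_inv_rot.
Qed.

Lemma pos_comm_rot (x y : G) : pos_comm x y <-> pos_comm (rot x) (rot y).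
Proof.
  split; [apply (npow_iso_pos_comm rot_iso)|].
  intros P. apply (npow_iso_pos_comm (graph_iso_by_sym rot_iso)) in P.
  now rewrite !(proj1 rot_iso) in P.
Qed.

Lemma pos_comm_rot_iter n (x y : G) :
  pos_comm x y <-> pos_comm (Nat.iter n rot x) (Nat.iter n rot y).
Proof. induction n as [|n IH]; [easy|]. now rewrite IH, pos_comm_rot. Qed.

Lemma torsion_rot_iter n (x : G) : torsion (Nat.iter n rot x) <-> torsion x.
Proof. induction n as [|n IH]; [easy|]. simpl. now rewrite torsion_rot. Qed.

Lemma not_pos_comm_rot_iter_inv n (x : G) : ~ torsion x -> ~ pos_comm (Nat.iter n rot x) (inv x).
Proof.
  (* with y = rot^(n/2) x, the dihedral relation turns this into y ~ y^-1 or rot y ~ y^-1 *)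
  intros Tx P. destruct (Nat.Even_or_Odd n) as [[k ->]|[k ->]];
    [replace (2 * k)%nat with (k + k)%nat in P by lia
    |replace (2 * k + 1)%nat with (k + S k)%nat in P by lia];
    rewrite Nat.iter_add, <- (rot_iter_dihedral k x), <- pos_comm_rot_iter in P;
    assert (Ty : ~ torsion (Nat.iter k rot x)) by now rewrite torsion_rot_iter.
  - now apply (not_pos_comm_inv (Nat.iter k rot x)).
  - apply (not_pos_comm_conj_inv (inv (Nat.iter k rot x))); [now rewrite torsion_inv|].
    now apply commensurable_sym.
Qed.

Definition same_orbit (x y : G) : Prop :=
  exists n, pos_comm (Nat.iter n rot x) y \/ pos_comm (Nat.iter n rot y) x.

Lemma same_orbit_of_pos_comm (x y : G) : pos_comm x y -> same_orbit x y.
Proof. intros P. exists O. now left. Qed.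

Lemma same_orbit_refl (x : G) : same_orbit x x.
Proof. apply same_orbit_of_pos_comm, commensurable_refl. lia. Qed.

Lemma same_orbit_sym (x y : G) : same_orbit x y -> same_orbit y x.
Proof. intros [n P]. exists n. tauto. Qed.

Lemma same_orbit_rot (x : G) : same_orbit x (rot x).
Proof. exists 1%nat. left. apply commensurable_refl. lia. Qed.

Lemma pos_comm_iter_common_target (a b c : G) k l :
  pos_comm (Nat.iter (k + l) rot a) b -> pos_comm (Nat.iter l rot c) b ->
  pos_comm (Nat.iter k rot a) c.
Proof.
  intros P Q. rewrite (pos_comm_rot_iter l), <- Nat.iter_add, Nat.add_comm.
  apply (pos_comm_trans _ b); auto using commensurable_sym.
Qed.

Lemma pos_comm_iter_common_source (a b c : G) k l :
  pos_comm (Nat.iter (k + l) rot a) b -> pos_comm (Nat.iter l rot a) c ->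
  pos_comm (Nat.iter k rot c) b.
Proof.
  intros P Q. rewrite (pos_comm_rot_iter k), <- Nat.iter_add in Q.
  apply (pos_comm_trans _ (Nat.iter (k + l) rot a)); auto using commensurable_sym.
Qed.

Lemma same_orbit_trans (x y z : G) : same_orbit x y -> same_orbit y z -> same_orbit x z.
Proof.
  intros [n [Pn|Pn]] [m [Pm|Pm]].
  - exists (m + n)%nat. left. rewrite Nat.iter_add.
    apply (pos_comm_trans _ (Nat.iter m rot y)); auto. now apply pos_comm_rot_iter.
  - destruct (Nat.le_gt_cases m n).
    + exists (n - m)%nat. left. apply (pos_comm_iter_common_target x y z _ m); auto.
      now replace (n - m + m)%nat with n by lia.
    + exists (m - n)%nat. right. apply (pos_comm_iter_common_target z y x _ n); auto.
      now replace (m - n + n)%nat with m by lia.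
  - destruct (Nat.le_gt_cases m n).
    + exists (n - m)%nat. right. apply (pos_comm_iter_common_source y x z _ m); auto.
      now replace (n - m + m)%nat with n by lia.
    + exists (m - n)%nat. left. apply (pos_comm_iter_common_source y z x _ n); auto.
      now replace (m - n + n)%nat with m by lia.
  - exists (n + m)%nat. right. rewrite Nat.iter_add.
    apply (pos_comm_trans _ (Nat.iter n rot y)); auto. now apply pos_comm_rot_iter.
Qed.

Lemma same_orbit_inv (x y : G) : same_orbit x y -> same_orbit (inv x) (inv y).
Proof.
  assert (Flip : forall a b n, pos_comm (Nat.iter n rot a) b ->
            pos_comm (Nat.iter n rot (inv b)) (inv a)).
  { intros a b n P. apply commensurable_inv, (pos_comm_rot_iter n) in P.
    rewrite rot_iter_dihedral in P. now apply commensurable_sym. }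
  intros [n [P|P]]; exists n; [right|left]; now apply Flip.
Qed.

Lemma not_same_orbit_inv (x : G) : ~ torsion x -> ~ same_orbit x (inv x).
Proof.
  intros Tx [n [P|P]].
  - now apply (not_pos_comm_rot_iter_inv n x).
  - apply (not_pos_comm_rot_iter_inv n (inv x)); [now rewrite torsion_inv|].
    now rewrite inv_inv.
Qed.

(* The orbits come in pairs exchanged by inversion; [chosen] selects one orbit of each pair. *)
Definition orbit_ref (x : G) : G :=
  epsilon (inhabits lone) (fun r => same_orbit r x \/ same_orbit r (inv x)).

Definition chosen (x : G) : Prop := same_orbit (orbit_ref x) x.

Lemma orbit_ref_spec (x : G) : same_orbit (orbit_ref x) x \/ same_orbit (orbit_ref x) (inv x).
Proof. unfold orbit_ref. apply epsilon_spec. exists x. left. apply same_orbit_refl. Qed.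

Lemma orbit_ref_eq (x y : G) :
  (forall r, same_orbit r x \/ same_orbit r (inv x) <-> same_orbit r y \/ same_orbit r (inv y)) ->
  orbit_ref x = orbit_ref y.
Proof.
  intros E. unfold orbit_ref. f_equal. apply functional_extensionality. intros r.
  now apply propositional_extensionality.
Qed.

Lemma chosen_inv (x : G) : ~ torsion x -> chosen (inv x) <-> ~ chosen x.
Proof.
  intros Tx. unfold chosen.
  rewrite (orbit_ref_eq (inv x) x) by (intros r; rewrite inv_inv; tauto).
  destruct (orbit_ref_spec x) as [O|O]; split; intros P; try tauto.
  - intros Q. apply (not_same_orbit_inv x Tx), (same_orbit_trans _ (orbit_ref x));
      auto using same_orbit_sym.
  - intros Q. apply (not_same_orbit_inv x Tx), (same_orbit_trans _ (orbit_ref x));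
      auto using same_orbit_sym.
Qed.

Lemma chosen_same_orbit (x y : G) : same_orbit x y -> chosen x <-> chosen y.
Proof.
  intros Oxy. unfold chosen. rewrite (orbit_ref_eq x y).
  - split; intros O; eapply same_orbit_trans; eauto using same_orbit_sym.
  - pose proof (same_orbit_inv x y Oxy).
    intros r. split; intros [O|O]; [left|right|left|right];
      eapply same_orbit_trans; eauto using same_orbit_sym.
Qed.

Definition twisted (x : G) : Prop := ~ torsion x /\ ~ chosen x.

Definition twist (x : G) : G :=
  if excluded_middle_informative (twisted x) then rot x else x.

Definition untwist (x : G) : G :=
  if excluded_middle_informative (twisted x) then rot_back x else x.

Lemma twisted_rot (x : G) : twisted (rot x) <-> twisted x.
Proof.
  unfold twisted. now rewrite torsion_rot, <- (chosen_same_orbit x (rot x) (same_orbit_rot x)).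
Qed.

Lemma twisted_rot_back (x : G) : twisted (rot_back x) <-> twisted x.
Proof. rewrite <- twisted_rot. now rewrite (proj1 (proj2 rot_iso)). Qed.

Lemma twisted_twist (x : G) : twisted (twist x) <-> twisted x.
Proof. unfold twist. destruct excluded_middle_informative; [apply twisted_rot | reflexivity]. Qed.

Lemma twisted_npow_adj (x y : G) : powerN_adj G x y -> twisted x <-> twisted y.
Proof.
  intros A. unfold twisted.
  rewrite (torsion_pgraph_adj (fun n => 0 < n) x y) by (lia || exact A).
  now rewrite (chosen_same_orbit x y (same_orbit_of_pos_comm x y (npow_adj_pos_comm x y A))).
Qed.

Lemma twist_iso : graph_iso_by (powerN_adj G) (powerN_adj G) twist untwist.
Proof.
  pose proof rot_iso as [K1 [K2 K3]]. split; [|split]; [unfold twist, untwist .. |].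
  - intros x. destruct (excluded_middle_informative (twisted x)) as [T|T];
      destruct excluded_middle_informative as [T'|T']; auto;
      rewrite ?twisted_rot in T'; tauto.
  - intros x. destruct (excluded_middle_informative (twisted x)) as [T|T];
      destruct excluded_middle_informative as [T'|T']; auto;
      rewrite ?twisted_rot_back in T'; tauto.
  - intros x y.
    (* adjacent vertices are twisted simultaneously, and rot is an automorphism *)
    assert (Pair : (twisted x <-> twisted y) ->
                   (powerN_adj G x y <-> powerN_adj G (twist x) (twist y))).
    { intros E. pose proof (K3 x y). unfold twist.
      destruct (excluded_middle_informative (twisted x)), (excluded_middle_informative (twisted y));
        tauto. }
    split; intros A; apply Pair; auto using twisted_npow_adj.
    rewrite <- twisted_twist, <- (twisted_twist y). now apply twisted_npow_adj.
Qed.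

Lemma twist_inv (x : G) : ~ torsion x -> twist (inv x) = conj_inv (twist x).
Proof.
  intros Tx. assert (Tix : ~ torsion (inv x)) by now rewrite torsion_inv.
  unfold twist, twisted.
  destruct (excluded_middle_informative (~ torsion x /\ ~ chosen x)) as [T|T];
    destruct excluded_middle_informative as [T'|T']; rewrite ?chosen_inv in T' by auto;
    try tauto.
  - unfold rot. now rewrite conj_inv_involutive.
  - unfold rot. now rewrite inv_inv.
Qed.

Lemma iso_twist_inv (x : G) : ~ torsion x -> f (twist (inv x)) = inv (f (twist x)).
Proof. intros Tx. rewrite twist_inv by auto. unfold conj_inv. now rewrite (proj1 (proj2 I)). Qed.
End NpowToZpm.

Lemma zpm_iso_of_npow_graph_iso {G H : Loop} `{power_assoc G} `{power_assoc H} :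
  graph_iso (powerN_adj G) (powerN_adj H) -> graph_iso (powerZpm_adj G) (powerZpm_adj H).
Proof.
  intros [f [g I]]. eexists; eexists.
  apply (zpm_iso_of_npow_iso (graph_iso_by_comp (twist_iso f g I) I)).
  exact (iso_twist_inv f g I).
Qed.

Theorem mainTheorem6 (G H : Loop) (hG : power_assoc G) (hH : power_assoc H) :
  (graph_iso (power_adj G) (power_adj H) <->
   graph_iso (powerZpm_adj G) (powerZpm_adj H)) /\
  (graph_iso (powerZpm_adj G) (powerZpm_adj H) <->
   graph_iso (powerN_adj G) (powerN_adj H)).
Proof.
  split; split.
  - apply zpm_iso_of_power_graph_iso.
  - apply power_iso_of_zpm_graph_iso.
  - apply npow_iso_of_zpm_graph_iso.
  - apply zpm_iso_of_npow_graph_iso.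
Qed.
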